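(* Consider the parametric constraint system $g(p,x)\in C$ under the standing assumptions at $(\bar p,\bar x)\in\operatorname{gph}\Gamma$, let $\zeta:P\to\mathbb{R}$ be continuous at $\bar p$ and $D:=D^{\mathrm{Im}}_{p,\zeta}g(\bar p,\bar x)$. Assume that for every $v\in D$ and every $t_k\downarrow0$ there is $u\in\mathbb{R}^n$ with $\liminf_{k\to\infty}\operatorname{dist}(g(\bar p,\bar x)+t_k(v+\nabla_xg(\bar p,\bar x)u);C)/t_k=0$, and that for every $(v,u)\in D\times\mathbb{R}^n$, $(v,u)\ne(0,0)$, with $v+\nabla_xg(\bar p,\bar x)u\in T_C(g(\bar p,\bar x))$ the implication $$\big[\lambda\in N_C\big(g(\bar p,\bar x);v+\nabla_xg(\bar p,\bar x)u\big),\ \nabla_xg(\bar p,\bar x)^T\lambda=0\big]\Longrightarrow\lambda=0$$ holds. Then the system enjoys Robinson stability at $(\bar p,\bar x)$.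
   Context: $P$ is a topological space, $C\subset\mathbb{R}^l$ closed, $g:P\times\mathbb{R}^n\to\mathbb{R}^l$, $\Gamma(p)=\{x:g(p,x)\in C\}$. Standing assumptions: there are neighborhoods $U$ of $\bar x$ and $V$ of $\bar p$ such that for each $p\in V$ the map $g(p,\cdot)$ is continuously differentiable on $U$, and $g$, $\nabla_xg$ are continuous at $(\bar p,\bar x)$. Robinson stability at $(\bar p,\bar x)$: there exist $\kappa\ge0$ and neighborhoods $U$ of $\bar x$, $V$ of $\bar p$ with $\operatorname{dist}(x;\Gamma(p))\le\kappa\operatorname{dist}(g(p,x);C)$ for all $(p,x)\in V\times U$. Image derivative $D^{\mathrm{Im}}_{p,\zeta}g(\bar p,\bar x)$: the smallest closed cone containing $0$ and all $v$ for which there is a sequence $p_k\in P$ with $0<\|g(p_k,\bar x)-g(\bar p,\bar x)\|<1/k$, $\|\nabla_xg(p_k,\bar x)-\nabla_xg(\bar p,\bar x)\|<1/k$, $|\zeta(p_k)-\zeta(\bar p)|<1/k$, and $v=\lim_k(g(p_k,\bar x)-g(\bar p,\bar x))/\|g(p_k,\bar x)-g(\bar p,\bar x)\|$. $T_C$ is the contingent cone; $N_C(\bar z;w)=\{v:\exists t_k\downarrow0,w_k\to w,v_k\to v,\ \bar z+t_kw_k\in C,\ v_k\in\widehat N_C(\bar z+t_kw_k)\}$ is the directional limiting normal cone, $\widehat N_C$ the regular normal cone. *)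

From Stdlib Require Import Fin Reals Lra Lia Classical ClassicalEpsilon FunctionalExtensionality.
Open Scope R_scope.

Record Topology (P : Type) := {
  is_open : (P -> Prop) -> Prop;
  open_full : is_open (fun _ => True);
  open_inter : forall U V, is_open U -> is_open V -> is_open (fun x => U x /\ V x);
  open_union : forall F : (P -> Prop) -> Prop,
      (forall U, F U -> is_open U) -> is_open (fun x => exists U, F U /\ U x)
}.
Arguments is_open {P} _ _.

Definition cont_at {P : Type} (T : Topology P) (f : P -> R) (p0 : P) : Prop :=
  forall eps, 0 < eps ->
    exists W, is_open T W /\ W p0 /\ forall p, W p -> Rabs (f p - f p0) < eps.

Definition Vec (n : nat) := Fin.t n -> R.
Definition Mat (l n : nat) := Fin.t l -> Fin.t n -> R.

Fixpoint fsum (n : nat) : (Fin.t n -> R) -> R :=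
  match n return (Fin.t n -> R) -> R with
  | O => fun _ => 0
  | S m => fun f => f Fin.F1 + fsum m (fun i => f (Fin.FS i))
  end.

Definition vzero {n} : Vec n := fun _ => 0.
Definition vadd {n} (x y : Vec n) : Vec n := fun i => x i + y i.
Definition vsub {n} (x y : Vec n) : Vec n := fun i => x i - y i.
Definition vscale {n} (t : R) (x : Vec n) : Vec n := fun i => t * x i.
Definition dot {n} (x y : Vec n) : R := fsum n (fun i => x i * y i).
Definition norm {n} (x : Vec n) : R := sqrt (dot x x).

Definition mv {l n} (A : Mat l n) (u : Vec n) : Vec l :=
  fun i => fsum n (fun j => A i j * u j).
Definition mtv {l n} (A : Mat l n) (lam : Vec l) : Vec n :=
  fun j => fsum l (fun i => A i j * lam i).
Definition msub {l n} (A B : Mat l n) : Mat l n := fun i j => A i j - B i j.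
(** Frobenius norm (any matrix norm gives the same notions below) *)
Definition mnorm {l n} (A : Mat l n) : R :=
  sqrt (fsum l (fun i => fsum n (fun j => A i j * A i j))).

Definition is_closed {n} (S : Vec n -> Prop) : Prop :=
  forall w, ~ S w -> exists d, 0 < d /\ forall y, norm (vsub y w) < d -> ~ S y.

Definition is_cone {n} (K : Vec n -> Prop) : Prop :=
  forall v t, K v -> 0 <= t -> K (vscale t v).

Definition vcv {n} (u : nat -> Vec n) (v : Vec n) : Prop :=
  forall eps, 0 < eps -> exists N, forall k, (N <= k)%nat -> norm (vsub (u k) v) < eps.
(** t_k decreases to 0 in the sense t_k > 0, t_k -> 0 *)
Definition tends_down_0 (t : nat -> R) : Prop :=
  (forall k, 0 < t k) /\ Un_cv t 0.

Definition liminf_eq (a : nat -> R) (L : R) : Prop :=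
  forall eps, 0 < eps ->
    (exists N, forall k, (N <= k)%nat -> L - eps < a k) /\
    (forall N, exists k, (N <= k)%nat /\ a k < L + eps).

Definition is_dist {n} (S : Vec n -> Prop) (w : Vec n) (d : R) : Prop :=
  (forall y, S y -> d <= norm (vsub w y)) /\
  (forall eps, 0 < eps -> exists y, S y /\ norm (vsub w y) < d + eps).
(** dist(w;S) for nonempty S (value irrelevant/unspecified for empty S) *)
Definition setdist {n} (S : Vec n -> Prop) (w : Vec n) : R :=
  epsilon (inhabits 0) (fun d => is_dist S w d).
(** "dist(w;S) <= r" with the convention dist(w;emptyset) = +infinity *)
Definition dist_le {n} (S : Vec n -> Prop) (w : Vec n) (r : R) : Prop :=
  forall eps, 0 < eps -> exists y, S y /\ norm (vsub w y) <= r + eps.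

Definition has_deriv {n l} (f : Vec n -> Vec l) (x : Vec n) (A : Mat l n) : Prop :=
  forall eps, 0 < eps -> exists d, 0 < d /\ forall y, norm (vsub y x) < d ->
    norm (vsub (vsub (f y) (f x)) (mv A (vsub y x))) <= eps * norm (vsub y x).

(** Standing assumptions, with J p x = nabla_x g(p,x) *)
Definition standing_assumptions {P} (T : Topology P) {n l}
    (g : P -> Vec n -> Vec l) (J : P -> Vec n -> Mat l n) (pbar : P) (xbar : Vec n) : Prop :=
  exists r V, 0 < r /\ is_open T V /\ V pbar /\
    (forall p x, V p -> norm (vsub x xbar) < r ->
       has_deriv (g p) x (J p x) /\
       (forall eps, 0 < eps -> exists d, 0 < d /\ forall y,
          norm (vsub y xbar) < r -> norm (vsub y x) < d ->
          mnorm (msub (J p y) (J p x)) < eps)) /\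
    (forall eps, 0 < eps -> exists W d, is_open T W /\ W pbar /\ 0 < d /\
       forall p x, W p -> norm (vsub x xbar) < d ->
         norm (vsub (g p x) (g pbar xbar)) < eps) /\
    (forall eps, 0 < eps -> exists W d, is_open T W /\ W pbar /\ 0 < d /\
       forall p x, W p -> V p -> norm (vsub x xbar) < d -> norm (vsub x xbar) < r ->
         mnorm (msub (J p x) (J pbar xbar)) < eps).

Definition image_dir {P} {n l} (g : P -> Vec n -> Vec l) (J : P -> Vec n -> Mat l n)
    (zeta : P -> R) (pbar : P) (xbar : Vec n) (v : Vec l) : Prop :=
  exists pk : nat -> P,
    (forall k,
       0 < norm (vsub (g (pk k) xbar) (g pbar xbar)) /\
       norm (vsub (g (pk k) xbar) (g pbar xbar)) < / INR (S k) /\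
       (exists Ak, has_deriv (g (pk k)) xbar Ak /\
                   mnorm (msub Ak (J pbar xbar)) < / INR (S k)) /\
       Rabs (zeta (pk k) - zeta pbar) < / INR (S k)) /\
    vcv (fun k => vscale (/ norm (vsub (g (pk k) xbar) (g pbar xbar)))
                         (vsub (g (pk k) xbar) (g pbar xbar))) v.

Definition image_derivative {P} {n l} (g : P -> Vec n -> Vec l) (J : P -> Vec n -> Mat l n)
    (zeta : P -> R) (pbar : P) (xbar : Vec n) (w : Vec l) : Prop :=
  forall K : Vec l -> Prop, is_closed K -> is_cone K -> K vzero ->
    (forall v, image_dir g J zeta pbar xbar v -> K v) -> K w.

Definition tangent_cone {n} (C : Vec n -> Prop) (z : Vec n) (w : Vec n) : Prop :=
  exists (t : nat -> R) (wk : nat -> Vec n),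
    tends_down_0 t /\ vcv wk w /\ forall k, C (vadd z (vscale (t k) (wk k))).

Definition regular_normal {n} (C : Vec n -> Prop) (z : Vec n) (v : Vec n) : Prop :=
  C z /\ forall eps, 0 < eps -> exists d, 0 < d /\ forall z', C z' ->
    norm (vsub z' z) < d -> dot v (vsub z' z) <= eps * norm (vsub z' z).

Definition dir_normal {n} (C : Vec n -> Prop) (z w : Vec n) (v : Vec n) : Prop :=
  exists (t : nat -> R) (wk vk : nat -> Vec n),
    tends_down_0 t /\ vcv wk w /\ vcv vk v /\
    forall k, C (vadd z (vscale (t k) (wk k))) /\
              regular_normal C (vadd z (vscale (t k) (wk k))) (vk k).

Definition robinson_stable {P} (T : Topology P) {n l} (C : Vec l -> Prop)
    (g : P -> Vec n -> Vec l) (pbar : P) (xbar : Vec n) : Prop :=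
  exists kappa r V, 0 <= kappa /\ 0 < r /\ is_open T V /\ V pbar /\
    forall p x, V p -> norm (vsub x xbar) < r ->
      dist_le (fun y => C (g p y)) x (kappa * setdist C (g p x)).

From Pilot Require Import Defs.
From Stdlib Require Import Fin Reals Lra Lia Classical ClassicalEpsilon FunctionalExtensionality.
From Stdlib Require Rtopology.
Open Scope R_scope.

(** Suppose Robinson stability fails. Then there are parameters [p_k -> pbar] and points
    [x_k -> xbar] with [dist(x_k; Gamma(p_k)) > (k+1) dist(g(p_k,x_k); C)]. Ekeland's principle
    replaces [x_k] by a minimiser of [dist(g(p_k,.); C) + |. - x_k| / (k+1)]; the first-order
    condition there gives a unit regular normal [lam_k] at the projection [c_k] of [g(p_k,x_k)]
    onto [C] with [grad_x g(pbar,xbar)^T lam_k -> 0].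
    Blow up by [tau_k = |g(p_k,xbar) - g(pbar,xbar)| + |x_k - xbar|]: along a subsequence
    [(g(p_k,xbar) - g(pbar,xbar))/tau_k -> v], which lies in the image derivative,
    [(x_k - xbar)/tau_k -> u] with [(v,u) <> 0], and [lam_k -> lam] with [|lam| = 1].
    Testing the Ekeland inequality along the directions supplied by the first hypothesis shows
    [dist(g(p_k,x_k); C) = o(tau_k)], hence [(c_k - g(pbar,xbar))/tau_k -> v + grad_x g u].
    So this direction is tangent, [lam] is a directional limiting normal for it and lies in the
    kernel of [grad_x g(pbar,xbar)^T], contradicting the second hypothesis. *)

(** * Euclidean vectors and matrices *)

Lemma fsum_ext n (f g : Fin.t n -> R) : (forall i, f i = g i) -> fsum n f = fsum n g.
Proof.
  induction n; simpl; intros H; [reflexivity|].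
  rewrite H, (IHn (fun i => f (FS i)) (fun i => g (FS i))); auto.
Qed.

Lemma fsum_add n (f g : Fin.t n -> R) : fsum n (fun i => f i + g i) = fsum n f + fsum n g.
Proof. induction n; simpl; [lra|]. rewrite (IHn (fun i => f (FS i)) (fun i => g (FS i))). lra. Qed.

Lemma fsum_scal n c (f : Fin.t n -> R) : fsum n (fun i => c * f i) = c * fsum n f.
Proof. induction n; simpl; [ring|]. rewrite (IHn (fun i => f (FS i))). ring. Qed.

Lemma fsum_sub n (f g : Fin.t n -> R) : fsum n (fun i => f i - g i) = fsum n f - fsum n g.
Proof.
  rewrite (fsum_ext n _ (fun i => f i + -1 * g i)) by (intros; ring).
  rewrite fsum_add, fsum_scal; ring.
Qed.

Lemma fsum_zero n : fsum n (fun _ => 0) = 0.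
Proof. induction n; simpl; [lra|]. rewrite IHn; lra. Qed.

Lemma fsum_le n (f g : Fin.t n -> R) : (forall i, f i <= g i) -> fsum n f <= fsum n g.
Proof.
  induction n; simpl; intros H; [lra|].
  pose proof (H F1). pose proof (IHn (fun i => f (FS i)) (fun i => g (FS i)) (fun i => H (FS i))). lra.
Qed.

Lemma fsum_nonneg n (f : Fin.t n -> R) : (forall i, 0 <= f i) -> 0 <= fsum n f.
Proof. intros H. rewrite <- (fsum_zero n). apply fsum_le; auto. Qed.

Lemma fsum_ge_term n (f : Fin.t n -> R) : (forall i, 0 <= f i) -> forall i, f i <= fsum n f.
Proof.
  induction n; intros H i; [inversion i|].
  apply (Fin.caseS' i (fun i => f i <= fsum (S n) f)); simpl.
  - pose proof (fsum_nonneg n (fun i => f (FS i)) (fun i => H (FS i))). lra.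
  - intros j. pose proof (IHn (fun i => f (FS i)) (fun i => H (FS i)) j). pose proof (H F1). lra.
Qed.

Lemma fsum_comm n m (F : Fin.t n -> Fin.t m -> R) :
  fsum n (fun i => fsum m (fun j => F i j)) = fsum m (fun j => fsum n (fun i => F i j)).
Proof.
  induction n; simpl; [rewrite fsum_zero; auto|].
  rewrite (IHn (fun i j => F (FS i) j)), <- fsum_add. reflexivity.
Qed.

Ltac vext := let i := fresh "i" in
  extensionality i; unfold vadd, vsub, vscale, vzero, mv, msub; try ring.

Lemma dot_comm n (x y : Vec n) : dot x y = dot y x.
Proof. unfold dot; apply fsum_ext; intros; ring. Qed.

Lemma dot_self_nonneg n (x : Vec n) : 0 <= dot x x.
Proof. unfold dot; apply fsum_nonneg; intros; nra. Qed.

Lemma dot_add_r n (x y z : Vec n) : dot x (vadd y z) = dot x y + dot x z.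
Proof. unfold dot, vadd. rewrite <- fsum_add; apply fsum_ext; intros; ring. Qed.

Lemma dot_sub_r n (x y z : Vec n) : dot x (vsub y z) = dot x y - dot x z.
Proof. unfold dot, vsub. rewrite <- fsum_sub; apply fsum_ext; intros; ring. Qed.

Lemma dot_scale_r n (x y : Vec n) t : dot x (vscale t y) = t * dot x y.
Proof. unfold dot, vscale. rewrite <- fsum_scal; apply fsum_ext; intros; ring. Qed.

Lemma dot_add_l n (x y z : Vec n) : dot (vadd y z) x = dot y x + dot z x.
Proof. rewrite dot_comm, dot_add_r, (dot_comm _ x y), (dot_comm _ x z); auto. Qed.

Lemma dot_sub_l n (x y z : Vec n) : dot (vsub y z) x = dot y x - dot z x.
Proof. rewrite dot_comm, dot_sub_r, (dot_comm _ x y), (dot_comm _ x z); auto. Qed.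

Lemma dot_scale_l n (x y : Vec n) t : dot (vscale t y) x = t * dot y x.
Proof. rewrite dot_comm, dot_scale_r, dot_comm; auto. Qed.

Lemma norm_nonneg n (x : Vec n) : 0 <= norm x.
Proof. apply sqrt_pos. Qed.

Lemma norm_sqr n (x : Vec n) : norm x * norm x = dot x x.
Proof. apply sqrt_sqrt, dot_self_nonneg. Qed.

Lemma norm_sub_sqr n (x y : Vec n) :
  norm (vsub x y) * norm (vsub x y) = norm x * norm x - 2 * dot x y + norm y * norm y.
Proof. rewrite !norm_sqr, dot_sub_l, !dot_sub_r, (dot_comm n y x). ring. Qed.

Lemma norm_add_sqr n (x y : Vec n) :
  norm (vadd x y) * norm (vadd x y) = norm x * norm x + 2 * dot x y + norm y * norm y.
Proof. rewrite !norm_sqr, dot_add_l, !dot_add_r, (dot_comm n y x). ring. Qed.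

Lemma norm_le_sqr n (x : Vec n) a : 0 <= a -> dot x x <= a * a -> norm x <= a.
Proof. intros Ha H. unfold norm. rewrite <- (sqrt_square a Ha). apply sqrt_le_1_alt; auto. Qed.

Lemma abs_coord_le_norm n (x : Vec n) i : Rabs (x i) <= norm x.
Proof.
  unfold norm. rewrite <- sqrt_Rsqr_abs. apply sqrt_le_1_alt. unfold Rsqr, dot.
  apply (fsum_ge_term n (fun i => x i * x i)). intros; nra.
Qed.

Lemma norm_vzero n : norm (@vzero n) = 0.
Proof.
  unfold norm, dot, vzero. rewrite (fsum_ext n _ (fun _ => 0)) by (intros; ring).
  rewrite fsum_zero. apply sqrt_0.
Qed.

Lemma norm_eq0 n (x : Vec n) : norm x = 0 -> x = vzero.
Proof.
  intros H. extensionality i. unfold vzero.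
  pose proof (abs_coord_le_norm n x i).
  destruct (Req_dec (x i) 0) as [|Hi]; auto. pose proof (Rabs_pos_lt _ Hi). lra.
Qed.

Lemma norm_sub_eq0 n (x y : Vec n) : norm (vsub x y) = 0 -> x = y.
Proof.
  intros H. apply norm_eq0 in H. extensionality i.
  apply (f_equal (fun v => v i)) in H. unfold vsub, vzero in H. lra.
Qed.

Lemma dot_norm0_l n (x y : Vec n) : norm x = 0 -> dot x y = 0.
Proof.
  intros H. rewrite (norm_eq0 n x H). unfold dot, vzero.
  rewrite (fsum_ext n _ (fun _ => 0)) by (intros; ring). apply fsum_zero.
Qed.

Lemma cauchy_schwarz n (x y : Vec n) : dot x y <= norm x * norm y.
Proof.
  destruct (Req_dec (norm x) 0) as [Hx|Hx].
  { rewrite (dot_norm0_l n x y Hx), Hx. lra. }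
  destruct (Req_dec (norm y) 0) as [Hy|Hy].
  { rewrite dot_comm, (dot_norm0_l n y x Hy), Hy. lra. }
  pose proof (norm_nonneg n x); pose proof (norm_nonneg n y).
  set (X := norm x) in *. set (Y := norm y) in *.
  (* expand 0 <= |x/X - y/Y|^2 = 2 - 2 <x,y>/(XY) *)
  pose proof (dot_self_nonneg n (vsub (vscale (/X) x) (vscale (/Y) y))) as Hsq.
  rewrite dot_sub_l, !dot_sub_r, !dot_scale_l, !dot_scale_r, <- (norm_sqr n x), <- (norm_sqr n y),
    (dot_comm n y x) in Hsq.
  fold X Y in Hsq.
  replace (/ X * (/ X * (X * X)) - / X * (/ Y * dot x y)
           - (/ Y * (/ X * dot x y) - / Y * (/ Y * (Y * Y))))
    with (2 - 2 * (dot x y / (X * Y))) in Hsq by (field; lra).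
  assert (Hq : dot x y / (X * Y) <= 1) by lra.
  apply (Rmult_le_compat_l (X * Y)) in Hq; [|nra].
  replace (X * Y * (dot x y / (X * Y))) with (dot x y) in Hq by (field; lra). lra.
Qed.

Lemma norm_scale n t (x : Vec n) : norm (vscale t x) = Rabs t * norm x.
Proof.
  unfold norm. rewrite dot_scale_l, dot_scale_r, <- Rmult_assoc, sqrt_mult_alt by nra.
  rewrite <- sqrt_Rsqr_abs. reflexivity.
Qed.

Lemma norm_opp n (x : Vec n) : norm (vscale (-1) x) = norm x.
Proof. rewrite norm_scale, Rabs_left by lra. ring. Qed.

Lemma abs_cauchy_schwarz n (x y : Vec n) : Rabs (dot x y) <= norm x * norm y.
Proof.
  apply Rabs_le; split; [|apply cauchy_schwarz].
  pose proof (cauchy_schwarz n (vscale (-1) x) y). rewrite dot_scale_l, norm_opp in H. lra.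
Qed.

Lemma norm_triangle n (x y : Vec n) : norm (vadd x y) <= norm x + norm y.
Proof.
  pose proof (norm_nonneg n x); pose proof (norm_nonneg n y).
  apply norm_le_sqr; [lra|].
  rewrite dot_add_l, !dot_add_r, (dot_comm n y x), <- (norm_sqr n x), <- (norm_sqr n y).
  pose proof (cauchy_schwarz n x y). nra.
Qed.

Lemma norm_sub_comm n (x y : Vec n) : norm (vsub x y) = norm (vsub y x).
Proof. replace (vsub x y) with (vscale (-1) (vsub y x)) by vext. apply norm_opp. Qed.

Lemma norm_sub_triangle n (x y z : Vec n) : norm (vsub x z) <= norm (vsub x y) + norm (vsub y z).
Proof. replace (vsub x z) with (vadd (vsub x y) (vsub y z)) by vext. apply norm_triangle. Qed.

Lemma norm_sub_le n (x y : Vec n) : norm (vsub x y) <= norm x + norm y.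
Proof.
  replace (vsub x y) with (vadd x (vscale (-1) y)) by vext.
  rewrite <- (norm_opp n y). apply norm_triangle.
Qed.

Lemma norm_sub_self n (x : Vec n) : norm (vsub x x) = 0.
Proof. replace (vsub x x) with (@vzero n) by vext. apply norm_vzero. Qed.

Lemma norm_reverse_triangle n (x y : Vec n) : Rabs (norm x - norm y) <= norm (vsub x y).
Proof.
  pose proof (norm_triangle n (vsub x y) y) as Hx.
  pose proof (norm_triangle n (vsub y x) x) as Hy.
  replace (vadd (vsub x y) y) with x in Hx by vext.
  replace (vadd (vsub y x) x) with y in Hy by vext.
  rewrite (norm_sub_comm n y x) in Hy. apply Rabs_le. lra.
Qed.

Lemma norm_convex_comb_lt n (c y z : Vec n) r t :
  norm (vsub y c) < r -> norm (vsub z c) < r -> 0 <= t <= 1 ->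
  norm (vsub (vadd y (vscale t (vsub z y))) c) < r.
Proof.
  intros Hy Hz Ht.
  replace (vsub (vadd y (vscale t (vsub z y))) c)
    with (vadd (vscale (1 - t) (vsub y c)) (vscale t (vsub z c))) by vext.
  eapply Rle_lt_trans; [apply norm_triangle|]. rewrite !norm_scale, !Rabs_right by lra.
  assert ((1 - t) * norm (vsub y c) <= (1 - t) * r) by (apply Rmult_le_compat_l; lra).
  destruct (Req_dec t 0) as [->|]; [lra|].
  assert (t * norm (vsub z c) < t * r) by (apply Rmult_lt_compat_l; lra). lra.
Qed.

Lemma mnorm_nonneg l n (A : Mat l n) : 0 <= mnorm A.
Proof. apply sqrt_pos. Qed.

Lemma mnorm_sqr l n (A : Mat l n) :
  mnorm A * mnorm A = fsum l (fun i => fsum n (fun j => A i j * A i j)).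
Proof. apply sqrt_sqrt, fsum_nonneg; intros; apply fsum_nonneg; intros; nra. Qed.


Lemma dot_sqr_le n (x y : Vec n) : dot x y * dot x y <= dot x x * dot y y.
Proof.
  pose proof (abs_cauchy_schwarz n x y). pose proof (Rabs_pos (dot x y)).
  rewrite <- (norm_sqr n x), <- (norm_sqr n y).
  pose proof (Rsqr_abs (dot x y)). unfold Rsqr in *. rewrite H1.
  replace (norm x * norm x * (norm y * norm y)) with ((norm x * norm y) * (norm x * norm y)) by ring.
  apply Rmult_le_compat; auto.
Qed.

Lemma norm_mv_le l n (A : Mat l n) (u : Vec n) : norm (mv A u) <= mnorm A * norm u.
Proof.
  pose proof (mnorm_nonneg _ _ A); pose proof (norm_nonneg _ u).
  apply norm_le_sqr; [nra|].
  replace (mnorm A * norm u * (mnorm A * norm u)) with (dot u u * (mnorm A * mnorm A))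
    by (rewrite <- (norm_sqr _ u); ring).
  rewrite (mnorm_sqr l n A), <- fsum_scal. unfold dot at 1. apply fsum_le. intros i.
  rewrite (Rmult_comm (dot u u)). apply (dot_sqr_le n (fun j => A i j) u).
Qed.

Definition mtr {l n} (A : Mat l n) : Mat n l := fun j i => A i j.

Lemma mtv_mv l n (A : Mat l n) lam : mtv A lam = mv (mtr A) lam.
Proof. reflexivity. Qed.

Lemma mnorm_mtr l n (A : Mat l n) : mnorm (mtr A) = mnorm A.
Proof. unfold mnorm, mtr. f_equal. apply fsum_comm. Qed.

Lemma norm_mtv_le l n (A : Mat l n) lam : norm (mtv A lam) <= mnorm A * norm lam.
Proof. rewrite mtv_mv, <- mnorm_mtr. apply norm_mv_le. Qed.

Lemma dot_mv l n (A : Mat l n) lam u : dot lam (mv A u) = dot (mtv A lam) u.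
Proof.
  unfold dot, mv, mtv.
  rewrite (fsum_ext l _ (fun i => fsum n (fun j => lam i * (A i j * u j))))
    by (intros; rewrite fsum_scal; auto).
  rewrite fsum_comm. apply fsum_ext; intros j.
  rewrite Rmult_comm, <- fsum_scal. apply fsum_ext; intros; ring.
Qed.

Lemma mv_sub l n (A : Mat l n) x y : mv A (vsub x y) = vsub (mv A x) (mv A y).
Proof. extensionality i. unfold mv, vsub. rewrite <- fsum_sub. apply fsum_ext; intros; ring. Qed.

Lemma mv_scale l n (A : Mat l n) t x : mv A (vscale t x) = vscale t (mv A x).
Proof. extensionality i. unfold mv, vscale. rewrite <- fsum_scal. apply fsum_ext; intros; ring. Qed.

Lemma mv_msub l n (A B : Mat l n) x : mv (msub A B) x = vsub (mv A x) (mv B x).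
Proof. extensionality i. unfold mv, vsub, msub. rewrite <- fsum_sub. apply fsum_ext; intros; ring. Qed.

Lemma mtv_msub l n (A B : Mat l n) x : mtv (msub A B) x = vsub (mtv A x) (mtv B x).
Proof. extensionality i. unfold mtv, vsub, msub. rewrite <- fsum_sub. apply fsum_ext; intros; ring. Qed.


Lemma mtv_scale l n (A : Mat l n) t x : mtv A (vscale t x) = vscale t (mtv A x).
Proof. rewrite !mtv_mv. apply mv_scale. Qed.

(** * Sequences *)

Definition inv_succ (k : nat) : R := / INR (S k).

Lemma inv_succ_pos k : 0 < inv_succ k.
Proof. apply Rinv_0_lt_compat, lt_0_INR; lia. Qed.

Lemma inv_succ_le a b : (a <= b)%nat -> inv_succ b <= inv_succ a.
Proof. intros H. apply Rinv_le_contravar; [apply lt_0_INR; lia|apply le_INR; lia]. Qed.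

Lemma inv_succ_le1 k : inv_succ k <= 1.
Proof.
  pose proof (inv_succ_le 0 k ltac:(lia)) as H. unfold inv_succ in H.
  change (INR 1) with 1 in H. rewrite Rinv_1 in H. exact H.
Qed.

Lemma inv_succ_cv : Un_cv inv_succ 0.
Proof.
  apply (Un_cv_ext (fun N => RinvN N)); [|exact RinvN_cv].
  intros k. unfold inv_succ. rewrite S_INR. reflexivity.
Qed.

Lemma inv_succ_small eps : 0 < eps -> exists N, forall k, (N <= k)%nat -> inv_succ k < eps.
Proof.
  intros He. destruct (inv_succ_cv eps He) as [N HN]. exists N. intros k Hk.
  specialize (HN k Hk). unfold R_dist in HN. rewrite Rminus_0_r in HN.
  pose proof (Rle_abs (inv_succ k)). lra.
Qed.

Definition subseq (phi : nat -> nat) := forall k, (phi k < phi (S k))%nat.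

Lemma subseq_le phi : subseq phi -> forall k m, (k <= m)%nat -> (phi k <= phi m)%nat.
Proof. intros H k m Hkm. induction Hkm; auto. specialize (H m). lia. Qed.

Lemma subseq_ge phi : subseq phi -> forall k, (k <= phi k)%nat.
Proof. intros H k. induction k; [lia|]. specialize (H k). lia. Qed.

Lemma subseq_comp phi psi : subseq phi -> subseq psi -> subseq (fun k => phi (psi k)).
Proof.
  intros H1 H2 k. pose proof (subseq_le phi H1 (S (psi k)) (psi (S k)) (H2 k)).
  specialize (H1 (psi k)). lia.
Qed.

Lemma vcv_subseq n (x : nat -> Vec n) v phi : vcv x v -> subseq phi -> vcv (fun k => x (phi k)) v.
Proof.
  intros H Hp eps He. destruct (H eps He) as [N HN]. exists N. intros k Hk.
  apply HN. pose proof (subseq_ge phi Hp k). lia.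
Qed.

Lemma Un_cv_subseq (u : nat -> R) l phi : Un_cv u l -> subseq phi -> Un_cv (fun k => u (phi k)) l.
Proof.
  intros H Hp eps He. destruct (H eps He) as [N HN]. exists N. intros k Hk.
  apply HN. pose proof (subseq_ge phi Hp k). lia.
Qed.

Lemma subseq_of_small_terms (d : nat -> R) :
  (forall eps N, 0 < eps -> exists k, (N <= k)%nat /\ d k < eps) ->
  exists phi, subseq phi /\ forall k, d (phi k) < inv_succ k.
Proof.
  intros H.
  assert (pick : forall m N : nat, {k | (N <= k)%nat /\ d k < inv_succ m}).
  { intros m N. apply constructive_indefinite_description, H, inv_succ_pos. }
  pose (phi := fix phi k := match k with
                            | O => proj1_sig (pick O O)
                            | S k => proj1_sig (pick (S k) (S (phi k))) end).
  exists phi. split; intros k.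
  - change (phi (S k)) with (proj1_sig (pick (S k) (S (phi k)))).
    destruct (proj2_sig (pick (S k) (S (phi k)))). lia.
  - destruct k; apply (proj2_sig (pick _ _)).
Qed.

Lemma Un_cv_of_le (u e : nat -> R) l :
  (forall k, Rabs (u k - l) <= e k) -> Un_cv e 0 -> Un_cv u l.
Proof.
  intros H He eps Heps. destruct (He eps Heps) as [N HN]. exists N. intros k Hk.
  specialize (HN k Hk). specialize (H k). unfold R_dist in *.
  rewrite Rminus_0_r in HN. pose proof (Rle_abs (e k)). lra.
Qed.

Lemma Un_cv_dist0 (u : nat -> R) l : Un_cv u l -> Un_cv (fun k => Rabs (u k - l)) 0.
Proof.
  intros H eps He. destruct (H eps He) as [N HN]. exists N. intros k Hk.
  unfold R_dist. rewrite Rminus_0_r, Rabs_Rabsolu. apply HN, Hk.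
Qed.

Lemma bolzano_weierstrass_R (u : nat -> R) M : (forall k, Rabs (u k) <= M) ->
  exists phi l, subseq phi /\ Un_cv (fun k => u (phi k)) l.
Proof.
  intros H.
  destruct (Rtopology.Bolzano_Weierstrass u (fun c => -M <= c <= M) (Rtopology.compact_P3 (-M) M))
    as [l Hl].
  { intros k. pose proof (H k). pose proof (Rle_abs (u k)). pose proof (Rle_abs (- u k)).
    rewrite Rabs_Ropp in *. lra. }
  destruct (subseq_of_small_terms (fun k => Rabs (u k - l))) as [phi [Hp Hc]].
  { intros eps N He.
    assert (Hn : Rtopology.neighbourhood (Rtopology.disc l (mkposreal eps He)) l)
      by (exists (mkposreal eps He); intros y Hy; exact Hy).
    destruct (Hl _ N Hn) as [k [Hk Hv]]. exists k; split; [exact Hk|exact Hv]. }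
  exists phi, l. split; [exact Hp|].
  apply (Un_cv_of_le _ inv_succ); [|exact inv_succ_cv]. intros k. left; apply Hc.
Qed.

Lemma vcv_iff n (x : nat -> Vec n) v : vcv x v <-> Un_cv (fun k => norm (vsub (x k) v)) 0.
Proof.
  unfold Un_cv, R_dist. setoid_rewrite Rminus_0_r.
  split; intros H eps He; destruct (H eps He) as [N HN]; exists N; intros k Hk; specialize (HN k Hk);
    rewrite Rabs_right in *; auto; apply Rle_ge, norm_nonneg.
Qed.

Lemma vcv_of_le n (x : nat -> Vec n) v e :
  (forall k, norm (vsub (x k) v) <= e k) -> Un_cv e 0 -> vcv x v.
Proof.
  intros H He. apply vcv_iff, (Un_cv_of_le _ e); auto. intros k.
  rewrite Rminus_0_r, Rabs_right; [apply H|apply Rle_ge, norm_nonneg].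
Qed.

Lemma bolzano_weierstrass n (x : nat -> Vec n) M : (forall k, norm (x k) <= M) ->
  exists phi v, subseq phi /\ vcv (fun k => x (phi k)) v.
Proof.
  revert x M. induction n; intros x M H.
  - exists (fun k => k), vzero. split; [intros k; lia|].
    intros eps He. exists O. intros k _. unfold norm, dot. simpl. rewrite sqrt_0. auto.
  - set (tl := fun (y : Vec (S n)) i => y (FS i)).
    assert (Hhd : forall y : Vec (S n), dot y y = y F1 * y F1 + dot (tl y) (tl y)) by reflexivity.
    destruct (bolzano_weierstrass_R (fun k => x k F1) M) as [phi1 [a [H1 Ha]]].
    { intros k. eapply Rle_trans; [apply abs_coord_le_norm|apply H]. }
    destruct (IHn (fun k => tl (x (phi1 k))) M) as [phi2 [t [H2 Ht]]].
    { intros k. eapply Rle_trans; [|apply (H (phi1 k))]. unfold norm. apply sqrt_le_1_alt.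
      rewrite (Hhd (x (phi1 k))). nra. }
    set (v := fun i => Fin.caseS' i (fun _ => R) a t).
    exists (fun k => phi1 (phi2 k)), v. split; [apply subseq_comp; auto|].
    apply (vcv_of_le _ _ _ (fun k => Rabs (x (phi1 (phi2 k)) F1 - a)
                                  + norm (vsub (tl (x (phi1 (phi2 k)))) t))).
    + intros k. set (y := vsub (x (phi1 (phi2 k))) v).
      change (norm y <= Rabs (y F1) + norm (tl y)).
      pose proof (Rabs_pos (y F1)). pose proof (norm_nonneg n (tl y)).
      apply norm_le_sqr; [lra|]. rewrite Hhd, <- norm_sqr.
      pose proof (Rsqr_abs (y F1)). unfold Rsqr in *. nra.
    + replace 0 with (0 + 0) by ring. apply CV_plus.
      * apply Un_cv_dist0, (Un_cv_subseq (fun k => x (phi1 k) F1)); auto.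
      * apply vcv_iff, Ht.
Qed.

Lemma Un_cv_const c : Un_cv (fun _ => c) c.
Proof. intros eps He. exists O. intros. unfold R_dist. rewrite Rminus_diag, Rabs_R0. auto. Qed.


Lemma vcv_ext n (x y : nat -> Vec n) v : (forall k, x k = y k) -> vcv x v -> vcv y v.
Proof. intros H Hx eps He. destruct (Hx eps He) as [N HN]. exists N. intros k Hk. rewrite <- H. auto. Qed.

Lemma vcv_add n (x y : nat -> Vec n) v w :
  vcv x v -> vcv y w -> vcv (fun k => vadd (x k) (y k)) (vadd v w).
Proof.
  intros Hx Hy. apply vcv_iff in Hx, Hy.
  apply (vcv_of_le _ _ _ (fun k => norm (vsub (x k) v) + norm (vsub (y k) w))).
  - intros k. replace (vsub (vadd (x k) (y k)) (vadd v w))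
      with (vadd (vsub (x k) v) (vsub (y k) w)) by vext.
    apply norm_triangle.
  - replace 0 with (0 + 0) by ring. apply CV_plus; auto.
Qed.

Lemma vcv_sub n (x y : nat -> Vec n) v w :
  vcv x v -> vcv y w -> vcv (fun k => vsub (x k) (y k)) (vsub v w).
Proof.
  intros Hx Hy. apply vcv_iff in Hx, Hy.
  apply (vcv_of_le _ _ _ (fun k => norm (vsub (x k) v) + norm (vsub (y k) w))).
  - intros k. replace (vsub (vsub (x k) (y k)) (vsub v w))
      with (vsub (vsub (x k) v) (vsub (y k) w)) by vext.
    apply norm_sub_le.
  - replace 0 with (0 + 0) by ring. apply CV_plus; auto.
Qed.

Lemma vcv_scale n (c : nat -> R) c0 (x : nat -> Vec n) v :
  Un_cv c c0 -> vcv x v -> vcv (fun k => vscale (c k) (x k)) (vscale c0 v).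
Proof.
  intros Hc Hx. apply vcv_iff in Hx. apply Un_cv_dist0 in Hc.
  apply (vcv_of_le _ _ _ (fun k => Rabs (c k - c0) * (norm v + norm (vsub (x k) v))
                                  + Rabs c0 * norm (vsub (x k) v))).
  - intros k. replace (vsub (vscale (c k) (x k)) (vscale c0 v)) with
      (vadd (vscale (c k - c0) (vadd v (vsub (x k) v))) (vscale c0 (vsub (x k) v))) by vext.
    eapply Rle_trans; [apply norm_triangle|]. rewrite !norm_scale. apply Rplus_le_compat_r.
    apply Rmult_le_compat_l; [apply Rabs_pos|apply norm_triangle].
  - replace 0 with (0 * (norm v + 0) + Rabs c0 * 0) by ring.
    apply CV_plus; apply CV_mult; auto using Un_cv_const.
    apply CV_plus; auto using Un_cv_const.
Qed.

Lemma vcv_mv l n (A : Mat l n) (x : nat -> Vec n) v :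
  vcv x v -> vcv (fun k => mv A (x k)) (mv A v).
Proof.
  intros Hx. apply vcv_iff in Hx.
  apply (vcv_of_le _ _ _ (fun k => mnorm A * norm (vsub (x k) v))).
  - intros k. rewrite <- mv_sub. apply norm_mv_le.
  - replace 0 with (mnorm A * 0) by ring. apply CV_mult; auto using Un_cv_const.
Qed.

Lemma vcv_norm n (x : nat -> Vec n) v : vcv x v -> Un_cv (fun k => norm (x k)) (norm v).
Proof.
  intros Hx. apply vcv_iff in Hx. apply (Un_cv_of_le _ _ _ (fun k => norm_reverse_triangle n (x k) v) Hx).
Qed.

Lemma Un_cv_inv u l : Un_cv u l -> l <> 0 -> Un_cv (fun k => / u k) (/ l).
Proof.
  intros H Hl. apply (continuity_seq (fun x => / x)); auto.
  apply (continuity_pt_inv id); [apply derivable_continuous_pt, derivable_pt_id|exact Hl].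
Qed.

Lemma closed_seq_limit n (S : Vec n -> Prop) (x : nat -> Vec n) v :
  is_closed S -> (forall k, S (x k)) -> vcv x v -> S v.
Proof.
  intros HS Hx Hv. apply NNPP. intros Hn. destruct (HS v Hn) as [d [Hd Hy]].
  destruct (Hv d Hd) as [N HN]. apply (Hy (x N)); auto.
Qed.

(** * Distance to a set *)

Lemma is_dist_exists n (S : Vec n -> Prop) w : (exists y, S y) -> exists d, is_dist S w d.
Proof.
  intros [y0 Hy0].
  destruct (completeness (fun r => exists y, S y /\ r = - norm (vsub w y))) as [m [Hub Hlub]].
  - exists 0. intros r [y [_ ->]]. pose proof (norm_nonneg n (vsub w y)); lra.
  - exists (- norm (vsub w y0)). exists y0; auto.
  - exists (- m). split.
    + intros y Hy. assert (- norm (vsub w y) <= m) by (apply Hub; exists y; auto). lra.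
    + intros eps He. apply NNPP. intros Hn. assert (m <= m - eps); [|lra].
      apply Hlub. intros r [y [Hy ->]]. apply Rnot_lt_le. intros Hlt. apply Hn.
      exists y. split; auto. lra.
Qed.

Section Distance.
Variables (n : nat) (S : Vec n -> Prop).
Hypothesis S_nonempty : exists y, S y.

Lemma setdist_spec w : is_dist S w (setdist S w).
Proof. unfold setdist. apply epsilon_spec, is_dist_exists, S_nonempty. Qed.

Lemma setdist_le w y : S y -> setdist S w <= norm (vsub w y).
Proof. apply setdist_spec. Qed.

Lemma setdist_nonneg w : 0 <= setdist S w.
Proof.
  apply Rnot_lt_le. intros Hlt.
  destruct (proj2 (setdist_spec w) (- setdist S w)) as [y [_ Hy]]; [lra|].
  pose proof (norm_nonneg n (vsub w y)). lra.
Qed.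

Lemma setdist_lipschitz w w' : setdist S w <= setdist S w' + norm (vsub w w').
Proof.
  apply Rle_plus_epsilon. intros eps He.
  destruct (proj2 (setdist_spec w') eps He) as [y [Hy Hd]].
  pose proof (setdist_le w y Hy). pose proof (norm_sub_triangle n w w' y). lra.
Qed.

Lemma setdist_attained w : is_closed S -> exists c, S c /\ norm (vsub w c) = setdist S w.
Proof.
  intros HS. destruct (setdist_spec w) as [Hlow Hup].
  assert (pick : forall k, {y | S y /\ norm (vsub w y) < setdist S w + inv_succ k})
    by (intros k; apply constructive_indefinite_description, Hup, inv_succ_pos).
  set (y := fun k => proj1_sig (pick k)).
  assert (Hy : forall k, S (y k) /\ norm (vsub w (y k)) < setdist S w + inv_succ k)
    by (intros k; apply (proj2_sig (pick k))).
  destruct (bolzano_weierstrass n y (norm w + setdist S w + 1)) as [phi [c [Hp Hc]]].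
  { intros k. destruct (Hy k). pose proof (inv_succ_le1 k).
    replace (y k) with (vsub w (vsub w (y k))) by vext.
    pose proof (norm_sub_le n w (vsub w (y k))). lra. }
  assert (HcS : S c) by (apply (closed_seq_limit n S (fun k => y (phi k))); auto; intros; apply Hy).
  exists c. split; auto. apply Rle_antisym; [|apply Hlow, HcS].
  apply Rle_plus_epsilon. intros eps He. destruct (Hc (eps/2)) as [N1 HN1]; [lra|].
  destruct (inv_succ_small (eps/2)) as [N2 HN2]; [lra|].
  set (k := max N1 N2). specialize (HN1 k ltac:(lia)). destruct (Hy (phi k)) as [_ Hk].
  specialize (HN2 (phi k) ltac:(pose proof (subseq_ge phi Hp k); lia)).
  pose proof (norm_sub_triangle n w (y (phi k)) c). lra.
Qed.

Lemma setdist_eq0 w : is_closed S -> setdist S w = 0 -> S w.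
Proof.
  intros HS H0. destruct (setdist_attained w HS) as [c [Hc Hd]].
  rewrite H0 in Hd. apply norm_sub_eq0 in Hd. subst. exact Hc.
Qed.

End Distance.

(** * Differential calculus *)

Lemma derivable_dot_along_line n l (f : Vec n -> Vec l) (A : Mat l n) x d e t :
  has_deriv f (vadd x (vscale t d)) A ->
  derivable_pt_lim (fun s => dot e (f (vadd x (vscale s d)))) t (dot e (mv A d)).
Proof.
  intros Hder eps He. set (y := vadd x (vscale t d)) in *.
  pose proof (norm_nonneg _ e); pose proof (norm_nonneg _ d).
  set (K := norm e * norm d + 1).
  destruct (Hder (eps / K)) as [d0 [Hd0 Hlin]]; [apply Rdiv_lt_0_compat; unfold K; nra|].
  assert (Hdel : 0 < d0 / (norm d + 1)) by (apply Rdiv_lt_0_compat; lra).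
  exists (mkposreal _ Hdel). intros h Hh Hsmall. simpl in Hsmall.
  pose proof (Rabs_pos_lt h Hh) as Hhpos.
  set (y' := vadd x (vscale (t + h) d)).
  assert (Hyy : vsub y' y = vscale h d) by (unfold y, y'; vext).
  assert (Hclose : norm (vsub y' y) < d0).
  { rewrite Hyy, norm_scale.
    apply (Rmult_lt_compat_r (norm d + 1)) in Hsmall; [|lra].
    replace (d0 / (norm d + 1) * (norm d + 1)) with d0 in Hsmall by (field; lra). nra. }
  specialize (Hlin y' Hclose). rewrite Hyy, norm_scale in Hlin.
  replace ((dot e (f y') - dot e (f y)) / h - dot e (mv A d))
    with (dot e (vsub (vsub (f y') (f y)) (mv A (vscale h d))) / h)
    by (rewrite !dot_sub_r, mv_scale, dot_scale_r; field; auto).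
  unfold Rdiv. rewrite Rabs_mult, Rabs_inv.
  apply (Rle_lt_trans _ (norm e * (eps / K * (Rabs h * norm d)) * / Rabs h)).
  - apply Rmult_le_compat_r; [left; apply Rinv_0_lt_compat; auto|].
    eapply Rle_trans; [apply abs_cauchy_schwarz|]. apply Rmult_le_compat_l; auto.
  - replace (norm e * (eps / K * (Rabs h * norm d)) * / Rabs h)
      with (eps * (norm e * norm d / K)) by (field; unfold K; split; nra).
    assert (norm e * norm d / K < 1).
    { apply (Rmult_lt_reg_r K); [unfold K; nra|].
      unfold Rdiv. rewrite Rmult_assoc, Rinv_l by (unfold K; nra). unfold K; lra. }
    nra.
Qed.

Lemma mean_value_ineq n l (f : Vec n -> Vec l) (A : Vec n -> Mat l n) (B : Mat l n) M x z :
  (forall t, 0 <= t <= 1 ->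
     has_deriv f (vadd x (vscale t (vsub z x))) (A (vadd x (vscale t (vsub z x)))) /\
     mnorm (msub (A (vadd x (vscale t (vsub z x)))) B) <= M) ->
  norm (vsub (vsub (f z) (f x)) (mv B (vsub z x))) <= M * norm (vsub z x).
Proof.
  intros H. set (d := vsub z x). set (e := vsub (vsub (f z) (f x)) (mv B d)).
  set (y := fun t => vadd x (vscale t d)).
  assert (HM : 0 <= M)
    by (destruct (H 0) as [_ HM]; [lra|]; eapply Rle_trans; [apply mnorm_nonneg|exact HM]).
  destruct (MVT_cor2 (fun t => dot e (f (y t))) (fun t => dot e (mv (A (y t)) d)) 0 1 Rlt_0_1)
    as [c [Hc Hc01]].
  { intros t Ht. apply derivable_dot_along_line, H, Ht. }
  assert (Hy1 : y 1 = z) by (unfold y, d; vext).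
  assert (Hy0 : y 0 = x) by (unfold y, d; vext).
  rewrite Hy1, Hy0, Rminus_0_r, Rmult_1_r in Hc.
  assert (Hee : dot e e = dot e (mv (msub (A (y c)) B) d))
    by (rewrite mv_msub, dot_sub_r, <- Hc; unfold e at 2; rewrite !dot_sub_r; ring).
  assert (Hbound : dot e e <= norm e * (M * norm d)).
  { rewrite Hee. eapply Rle_trans; [apply cauchy_schwarz|].
    apply Rmult_le_compat_l; [apply norm_nonneg|].
    eapply Rle_trans; [apply norm_mv_le|]. apply Rmult_le_compat_r; [apply norm_nonneg|].
    apply H. lra. }
  rewrite <- norm_sqr in Hbound. pose proof (norm_nonneg _ e). pose proof (norm_nonneg _ d).
  destruct (Req_dec (norm e) 0) as [He0|He0]; [rewrite He0; nra|].
  apply (Rmult_le_reg_l (norm e)); lra.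
Qed.

Lemma inf_exists (A : R -> Prop) : (exists a, A a) -> (forall a, A a -> 0 <= a) ->
  exists m, (forall a, A a -> m <= a) /\ forall eps, 0 < eps -> exists a, A a /\ a < m + eps.
Proof.
  intros [a0 Ha0] Hpos.
  destruct (completeness (fun r => A (- r))) as [m [Hub Hlub]].
  - exists 0. intros r Hr. specialize (Hpos _ Hr). lra.
  - exists (- a0). rewrite Ropp_involutive. exact Ha0.
  - exists (- m). split.
    + intros a Ha. assert (- a <= m) by (apply Hub; rewrite Ropp_involutive; exact Ha). lra.
    + intros eps He. apply NNPP. intros Hn. assert (m <= m - eps); [|lra].
      apply Hlub. intros r Hr. apply Rnot_lt_le. intros Hlt. apply Hn.
      exists (- r). split; [exact Hr|lra].
Qed.

Lemma closed_ball_closed n (c : Vec n) r : is_closed (fun y => norm (vsub y c) <= r).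
Proof.
  intros w Hw. exists (norm (vsub w c) - r). split; [lra|].
  intros y Hy Hyc. pose proof (norm_sub_triangle n w y c). rewrite norm_sub_comm in Hy. lra.
Qed.

Lemma lipschitz_min_on_ball n (psi : Vec n -> R) c r L : 0 <= r -> 0 <= L ->
  (forall y, 0 <= psi y) ->
  (forall y y', norm (vsub y c) <= r -> norm (vsub y' c) <= r ->
     psi y <= psi y' + L * norm (vsub y y')) ->
  exists z, norm (vsub z c) <= r /\ forall y, norm (vsub y c) <= r -> psi z <= psi y.
Proof.
  intros Hr HL Hpos Hlip. set (ball := fun y => norm (vsub y c) <= r).
  destruct (inf_exists (fun a => exists y, ball y /\ a = psi y)) as [m [Hlow Happ]].
  { exists (psi c). exists c. split; auto. unfold ball. rewrite norm_sub_self. exact Hr. }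
  { intros a [y [_ ->]]. apply Hpos. }
  assert (pick : forall k, {y | ball y /\ psi y < m + inv_succ k}).
  { intros k. apply constructive_indefinite_description.
    destruct (Happ _ (inv_succ_pos k)) as [a [[y [Hy ->]] Ha]]. exists y; auto. }
  set (y := fun k => proj1_sig (pick k)).
  assert (Hy : forall k, ball (y k) /\ psi (y k) < m + inv_succ k)
    by (intros k; apply (proj2_sig (pick k))).
  destruct (bolzano_weierstrass n y (norm c + r)) as [phi [z [Hp Hz]]].
  { intros k. destruct (Hy k) as [Hk _]. unfold ball in Hk.
    replace (y k) with (vadd (vsub (y k) c) c) by vext.
    eapply Rle_trans; [apply norm_triangle|]. lra. }
  assert (Hzb : ball z)
    by (apply (closed_seq_limit n ball (fun k => y (phi k))); [apply closed_ball_closed|intros; apply Hy|exact Hz]).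
  exists z. split; [exact Hzb|]. intros y0 Hy0.
  enough (psi z <= m) by (specialize (Hlow (psi y0) (ex_intro _ y0 (conj Hy0 eq_refl))); lra).
  apply (@Rle_cv_lim (fun _ => psi z) (fun k => m + inv_succ (phi k) + L * norm (vsub (y (phi k)) z))).
  - intros k. destruct (Hy (phi k)) as [Hk1 Hk2].
    pose proof (Hlip z (y (phi k)) Hzb Hk1). rewrite norm_sub_comm in H. lra.
  - apply Un_cv_const.
  - assert (Hlim : Un_cv (fun k => m + inv_succ (phi k) + L * norm (vsub (y (phi k)) z))
                          (m + 0 + L * 0)).
    { apply CV_plus; [apply CV_plus|apply CV_mult]; auto using Un_cv_const.
      - apply (Un_cv_subseq inv_succ); auto using inv_succ_cv.
      - apply vcv_iff, Hz. }
    replace (m + 0 + L * 0) with m in Hlim by ring. exact Hlim.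
Qed.

Lemma nearest_point_regular_normal n (C : Vec n -> Prop) w c : C c -> 0 < norm (vsub w c) ->
  (forall z, C z -> norm (vsub w c) <= norm (vsub w z)) ->
  regular_normal C c (vscale (/ norm (vsub w c)) (vsub w c)).
Proof.
  intros Hc Hd Hmin. split; auto. intros eps He.
  set (D := norm (vsub w c)) in *.
  exists (2 * D * eps). split; [nra|]. intros z Hz Hzc. specialize (Hmin z Hz).
  set (Z := norm (vsub z c)) in *. pose proof (norm_nonneg _ (vsub z c)). fold Z in H.
  assert (Hsq : D * D <= norm (vsub w z) * norm (vsub w z)) by (apply Rmult_le_compat; lra).
  replace (vsub w z) with (vsub (vsub w c) (vsub z c)) in Hsq by vext.
  rewrite norm_sub_sqr in Hsq. fold D Z in Hsq.
  rewrite dot_scale_l.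
  apply Rle_trans with (/ D * (Z * Z / 2)).
  - apply Rmult_le_compat_l; [left; apply Rinv_0_lt_compat|]; lra.
  - replace (/ D * (Z * Z / 2)) with (Z * (Z / (2 * D))) by (field; lra).
    rewrite (Rmult_comm eps). apply Rmult_le_compat_l; auto.
    apply (Rmult_le_reg_r (2 * D)); [lra|].
    replace (Z / (2 * D) * (2 * D)) with Z by (field; lra). lra.
Qed.

Lemma norm_add_le_first_order n (a b : Vec n) : 0 < norm a ->
  norm (vadd a b) <= norm a + dot a b / norm a + norm b * norm b / (2 * norm a).
Proof.
  intros Ha. set (X := dot a b / norm a + norm b * norm b / (2 * norm a)).
  pose proof (norm_add_sqr n a b) as Hsq.
  assert (HX : norm (vadd a b) * norm (vadd a b) = norm a * norm a + 2 * norm a * X)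
    by (rewrite Hsq; unfold X; field; lra).
  pose proof (Rle_0_sqr (norm (vadd a b))). unfold Rsqr in H.
  assert (0 <= norm a + 2 * X) by (apply (Rmult_le_reg_l (norm a)); nra).
  replace (norm a + dot a b / norm a + norm b * norm b / (2 * norm a)) with (norm a + X)
    by (unfold X; ring).
  apply norm_le_sqr; [lra|]. rewrite <- norm_sqr. nra.
Qed.

Lemma small_step_exists Q K r M : 0 <= Q -> 0 <= K -> 0 < r -> 0 < M ->
  exists tau, 0 < tau /\ tau * Q < r /\ tau * K <= M.
Proof.
  intros HQ HK Hr HM.
  assert (Hr' : 0 < r / (Q + 1)) by (apply Rdiv_lt_0_compat; lra).
  assert (HM' : 0 < M / (K + 1)) by (apply Rdiv_lt_0_compat; lra).
  exists (Rmin (r / (Q + 1)) (M / (K + 1)) / 2).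
  pose proof (Rmin_l (r / (Q + 1)) (M / (K + 1))); pose proof (Rmin_r (r / (Q + 1)) (M / (K + 1))).
  assert (0 < Rmin (r / (Q + 1)) (M / (K + 1))) by (apply Rmin_glb_lt; lra).
  assert (r / (Q + 1) * (Q + 1) = r) by (field; lra).
  assert (M / (K + 1) * (K + 1) = M) by (field; lra).
  repeat split; nra.
Qed.

Lemma le_of_forall_sqr_le Q s : 0 <= s ->
  (forall eps, 0 < eps -> Q * Q <= (s + eps) * Q + eps) -> Q <= s.
Proof.
  intros Hs Hkey. apply Rnot_lt_le. intros Hlt.
  set (eps := Q * (Q - s) / (2 * (Q + 1))).
  assert (Heps : 0 < eps) by (apply Rdiv_lt_0_compat; nra).
  specialize (Hkey eps Heps).
  assert (eps * (Q + 1) = Q * (Q - s) / 2) by (unfold eps; field; lra).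
  nra.
Qed.

Lemma local_min_gradient_le n l (G : Vec n -> Vec l) (A : Mat l n) x c s rho :
  has_deriv G x A -> 0 < rho -> 0 <= s -> 0 < norm (vsub (G x) c) ->
  (forall y, norm (vsub y x) < rho ->
     norm (vsub (G x) c) <= norm (vsub (G y) c) + s * norm (vsub y x)) ->
  norm (mtv A (vscale (/ norm (vsub (G x) c)) (vsub (G x) c))) <= s.
Proof.
  intros Hder Hrho Hs Hd Hmin.
  set (a := vsub (G x) c) in *. set (D := norm a) in *.
  set (q := mtv A (vscale (/ D) a)). pose proof (norm_nonneg _ q) as HQ. set (Q := norm q) in *.
  set (K := norm (mv A q) * norm (mv A q)). assert (HK : 0 <= K) by apply Rle_0_sqr.
  apply le_of_forall_sqr_le; [exact Hs|].
  (* Moving from [x] along [-q] decreases [|G - c|] at rate [Q^2]. *)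
  intros eps He. destruct (Hder eps He) as [d0 [Hd0 Hlin]].
  destruct (small_step_exists Q K (Rmin d0 rho) (2 * D * eps)) as (tau & Htau & Hstep & HtauK);
    auto; [apply Rmin_glb_lt; auto|nra|].
  set (y := vsub x (vscale tau q)).
  assert (Hdir : vsub y x = vscale (- tau) q) by (unfold y; vext).
  assert (Hyx : norm (vsub y x) = tau * Q)
    by (rewrite Hdir, norm_scale, Rabs_left; [unfold Q; ring|lra]).
  specialize (Hmin y ltac:(pose proof (Rmin_r d0 rho); lra)).
  specialize (Hlin y ltac:(pose proof (Rmin_l d0 rho); lra)).
  rewrite Hyx in Hmin, Hlin.
  set (b := vscale (- tau) (mv A q)).
  set (r := vsub (vsub (G y) (G x)) (mv A (vsub y x))) in Hlin.
  assert (Hsplit : vsub (G y) c = vadd (vadd a b) r)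
    by (unfold r, b, a; rewrite Hdir, mv_scale; vext).
  assert (Hab : dot a b = - tau * D * (Q * Q)).
  { unfold b. rewrite dot_scale_r, dot_mv.
    replace (mtv A a) with (vscale D q) by (unfold q; rewrite mtv_scale; vext; field; lra).
    rewrite dot_scale_l, <- norm_sqr. unfold Q. ring. }
  assert (Hbb : norm b * norm b = tau * tau * K)
    by (unfold b, K; rewrite norm_scale, Rabs_left by lra; ring).
  pose proof (norm_add_le_first_order l a b Hd) as Hfo. fold D in Hfo. rewrite Hab, Hbb in Hfo.
  pose proof (norm_triangle l (vadd a b) r) as Htri. rewrite <- Hsplit in Htri.
  replace (- tau * D * (Q * Q) / D) with (- tau * (Q * Q)) in Hfo by (field; lra).
  assert (Htail : tau * tau * K / (2 * D) <= tau * eps).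
  { apply (Rmult_le_reg_r (2 * D)); [lra|].
    replace (tau * tau * K / (2 * D) * (2 * D)) with (tau * (tau * K)) by (field; lra).
    nra. }
  assert (Hdiv : tau * (Q * Q) <= tau * ((s + eps) * Q + eps)) by nra.
  apply (Rmult_le_reg_l tau); lra.
Qed.

Lemma lipschitz_of_linearization n l (G : Vec n -> Vec l) (A : Mat l n) e y z :
  norm (vsub (vsub (G z) (G y)) (mv A (vsub z y))) <= e * norm (vsub z y) ->
  norm (vsub (G z) (G y)) <= (mnorm A + e) * norm (vsub z y).
Proof.
  intros Hlin. pose proof (norm_mv_le l n A (vsub z y)).
  replace (vsub (G z) (G y))
    with (vadd (vsub (vsub (G z) (G y)) (mv A (vsub z y))) (mv A (vsub z y))) by vext.
  eapply Rle_trans; [apply norm_triangle|]. lra.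
Qed.

Lemma norm_mtv_perturb l n (A B : Mat l n) v :
  norm (mtv B v) <= norm (mtv A v) + mnorm (msub A B) * norm v.
Proof.
  replace (mtv B v) with (vsub (mtv A v) (mtv (msub A B) v)) by (rewrite mtv_msub; vext).
  eapply Rle_trans; [apply norm_sub_le|]. apply Rplus_le_compat_l, norm_mtv_le.
Qed.

(** * Distance functions along a Lipschitz map *)

Section DistanceAlongMap.
Variables (n l : nat) (C : Vec l -> Prop) (G : Vec n -> Vec l).
Hypothesis C_closed : is_closed C.
Hypothesis C_nonempty : exists y, C y.

(* Ekeland's principle on a compact ball, where it reduces to minimising the perturbed function. *)
Lemma ekeland_on_ball xc r L e x : 0 <= L -> 0 <= e ->
  (forall y z, norm (vsub y xc) <= r -> norm (vsub z xc) <= r ->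
     norm (vsub (G z) (G y)) <= L * norm (vsub z y)) ->
  norm (vsub x xc) <= r ->
  exists z, norm (vsub z xc) <= r /\
    setdist C (G z) + e * norm (vsub z x) <= setdist C (G x) /\
    forall y, norm (vsub y xc) <= r -> setdist C (G z) <= setdist C (G y) + e * norm (vsub y z).
Proof.
  intros HL He Hlip Hx.
  pose proof (norm_nonneg n (vsub x xc)).
  destruct (lipschitz_min_on_ball n (fun y => setdist C (G y) + e * norm (vsub y x)) xc r (L + e))
    as [z [Hz Hmin]]; [lra|lra| | |].
  - intros y. pose proof (setdist_nonneg l C C_nonempty (G y)).
    pose proof (norm_nonneg n (vsub y x)). nra.
  - intros y y' Hy Hy'.
    pose proof (setdist_lipschitz l C C_nonempty (G y) (G y')).
    pose proof (Hlip y' y Hy' Hy).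
    pose proof (norm_sub_triangle n y y' x). pose proof (norm_nonneg n (vsub y y')).
    assert (e * norm (vsub y x) <= e * norm (vsub y y') + e * norm (vsub y' x)) by nra. nra.
  - exists z. split; [exact Hz|]. split.
    + specialize (Hmin x Hx). rewrite norm_sub_self in Hmin. lra.
    + intros y Hy. specialize (Hmin y Hy).
      pose proof (norm_sub_triangle n y z x).
      assert (e * norm (vsub y x) <= e * norm (vsub y z) + e * norm (vsub z x)) by nra. lra.
Qed.

Lemma ekeland_normal z A e rho :
  has_deriv G z A -> 0 <= e -> 0 < rho -> 0 < setdist C (G z) ->
  (forall y, norm (vsub y z) < rho -> setdist C (G z) <= setdist C (G y) + e * norm (vsub y z)) ->
  exists lam, norm lam = 1 /\
    regular_normal C (vsub (G z) (vscale (setdist C (G z)) lam)) lam /\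
    norm (mtv A lam) <= e.
Proof.
  intros Hder He Hrho Hpos Hmin. set (d := setdist C (G z)) in *.
  destruct (setdist_attained l C C_nonempty (G z) C_closed) as [c [Hc Hcd]]. fold d in Hcd.
  exists (vscale (/ d) (vsub (G z) c)).
  assert (Hproj : vsub (G z) (vscale d (vscale (/ d) (vsub (G z) c))) = c)
    by (vext; field; lra).
  rewrite Hproj, <- Hcd. split; [|split].
  - rewrite norm_scale, Rabs_right; [field|left; apply Rinv_0_lt_compat]; lra.
  - apply nearest_point_regular_normal; [exact Hc|lra|].
    intros z' Hz'. rewrite Hcd. apply setdist_le; auto.
  - apply (local_min_gradient_le n l G A z c e rho); auto; [lra|].
    intros y Hy. rewrite Hcd. pose proof (setdist_le l C C_nonempty (G y) c Hc).
    specialize (Hmin y Hy). lra.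
Qed.

End DistanceAlongMap.

(** * The contradiction argument *)

Section ParametricSystem.
Variables (P : Type) (T : Topology P) (n l : nat) (C : Vec l -> Prop).
Variables (g : P -> Vec n -> Vec l) (J : P -> Vec n -> Mat l n) (pbar : P) (xbar : Vec n).
Variable zeta : P -> R.
Hypothesis C_closed : is_closed C.
Hypothesis standing : standing_assumptions T g J pbar xbar.
Hypothesis feasible : C (g pbar xbar).
Hypothesis zeta_cont : cont_at T zeta pbar.

Local Notation g0 := (g pbar xbar).
Local Notation J0 := (J pbar xbar).

Let C_nonempty : exists y, C y := ex_intro _ g0 feasible.

Lemma jacobian_near e : 0 < e -> exists W d, is_open T W /\ W pbar /\ 0 < d /\
  forall p y, W p -> norm (vsub y xbar) < d ->
    has_deriv (g p) y (J p y) /\ mnorm (msub (J p y) J0) < e.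
Proof.
  intros He. destruct standing as (r & V & Hr & HVo & HVp & Hdiff & _ & HJc).
  destruct (HJc e He) as (W & d & HWo & HWp & Hd & HJ).
  exists (fun p => V p /\ W p), (Rmin d r).
  split; [apply open_inter; auto|]. split; [auto|]. split; [apply Rmin_glb_lt; auto|].
  intros p y [HV HW] Hy. pose proof (Rmin_l d r); pose proof (Rmin_r d r).
  split; [apply Hdiff; auto; lra|apply HJ; auto; lra].
Qed.

Lemma uniform_linearization e : 0 < e -> exists W d, is_open T W /\ W pbar /\ 0 < d /\
  forall p y z, W p -> norm (vsub y xbar) < d -> norm (vsub z xbar) < d ->
    norm (vsub (vsub (g p z) (g p y)) (mv J0 (vsub z y))) <= e * norm (vsub z y).
Proof.
  intros He. destruct (jacobian_near e He) as (W & d & HWo & HWp & Hd & HJ).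
  exists W, d. repeat split; auto. intros p y z HW Hy Hz.
  apply (mean_value_ineq n l (g p) (J p)). intros t Ht.
  destruct (HJ p (vadd y (vscale t (vsub z y))) HW) as [Hder Hnear];
    [apply norm_convex_comb_lt; auto|].
  split; [exact Hder|lra].
Qed.

Lemma not_robinson_stable_point : ~ robinson_stable T C g pbar xbar ->
  forall kappa r V, 0 <= kappa -> 0 < r -> is_open T V -> V pbar ->
  exists p x, V p /\ norm (vsub x xbar) < r /\
    exists eps, 0 < eps /\
      forall y, C (g p y) -> kappa * setdist C (g p x) + eps < norm (vsub x y).
Proof.
  intros Hns kappa r V Hk Hr HVo HVp. apply NNPP. intros Hno. apply Hns.
  exists kappa, r, V. repeat split; auto. intros p x Hp Hx eps He.
  apply NNPP. intros Hfar. apply Hno. exists p, x. repeat split; auto.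
  exists eps. split; auto. intros y Hy. apply Rnot_le_lt. intros Hle. apply Hfar. eauto.
Qed.

(** What the failure of Robinson stability with modulus [k + 1] yields at step [k]. *)
Record witness (k : nat) : Type := Witness {
  w_p : P; w_x : Vec n; w_lam : Vec l; w_dist : R; w_rad : R;
  w_rad_pos : 0 < w_rad;
  w_rad_le1 : w_rad <= 1;
  w_shift_small : norm (vsub (g w_p xbar) g0) < w_rad * inv_succ k;
  w_x_close : norm (vsub w_x xbar) < w_rad * inv_succ k;
  w_deriv : has_deriv (g w_p) xbar (J w_p xbar);
  w_deriv_close : mnorm (msub (J w_p xbar) J0) < inv_succ k;
  w_zeta_close : Rabs (zeta w_p - zeta pbar) < inv_succ k;
  w_linear : forall y z, norm (vsub y xbar) < w_rad -> norm (vsub z xbar) < w_rad ->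
    norm (vsub (vsub (g w_p z) (g w_p y)) (mv J0 (vsub z y))) <= inv_succ k * norm (vsub z y);
  w_dist_pos : 0 < w_dist;
  w_dist_eq : setdist C (g w_p w_x) = w_dist;
  w_lam_unit : norm w_lam = 1;
  w_lam_normal : regular_normal C (vsub (g w_p w_x) (vscale w_dist w_lam)) w_lam;
  w_lam_kernel : norm (mtv J0 w_lam) <= 2 * inv_succ k;
  w_ekeland : forall y, norm (vsub y xbar) < w_rad ->
    w_dist <= setdist C (g w_p y) + inv_succ k * norm (vsub y w_x)
}.

Lemma witness_of_violating_point k p x rad r0 L eps0 :
  0 < rad -> rad <= r0 -> r0 <= 1 -> 0 <= L ->
  (forall y z, norm (vsub y xbar) <= r0 -> norm (vsub z xbar) <= r0 ->
     norm (vsub (g p z) (g p y)) <= L * norm (vsub z y)) ->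
  (forall y, norm (vsub y xbar) < rad ->
     has_deriv (g p) y (J p y) /\ mnorm (msub (J p y) J0) < inv_succ k) ->
  (forall y z, norm (vsub y xbar) < rad -> norm (vsub z xbar) < rad ->
     norm (vsub (vsub (g p z) (g p y)) (mv J0 (vsub z y))) <= inv_succ k * norm (vsub z y)) ->
  norm (vsub (g p xbar) g0) < rad * inv_succ k ->
  norm (vsub (g p x) g0) < rad * inv_succ k * inv_succ k / 2 ->
  norm (vsub x xbar) < rad * inv_succ k / 2 ->
  Rabs (zeta p - zeta pbar) < inv_succ k ->
  0 < eps0 ->
  (forall y, C (g p y) -> INR (S k) * setdist C (g p x) + eps0 < norm (vsub x y)) ->
  inhabited (witness k).
Proof.
  intros Hrad Hrr0 Hr01 HL Hlip HJ Hlin Hshift Hgx Hx Hzeta Heps0 Hfar.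
  pose proof (inv_succ_pos k) as He. pose proof (inv_succ_le1 k) as He1. set (e := inv_succ k) in *.
  assert (Hke : INR (S k) * e = 1) by (unfold e, inv_succ; field; apply not_0_INR; lia).
  pose proof (setdist_le l C C_nonempty (g p x) g0 feasible).
  set (ep := setdist C (g p x)) in *.
  assert (Hep : ep < rad * e * e / 2) by lra.
  assert (Hep0 : 0 < ep).
  { destruct (Rle_lt_or_eq_dec 0 ep (setdist_nonneg l C C_nonempty _)) as [|H0]; auto.
    specialize (Hfar x (setdist_eq0 l C C_nonempty _ C_closed (eq_sym H0))).
    rewrite norm_sub_self, <- H0 in Hfar. lra. }
  destruct (ekeland_on_ball n l C (g p) C_nonempty xbar r0 L e x HL (Rlt_le _ _ He) Hlip ltac:(nra))
    as (z & Hz & Hdesc & Hek). fold ep in Hdesc.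
  pose proof (setdist_nonneg l C C_nonempty (g p z)) as Hdz.
  assert (Hzx : norm (vsub z x) <= INR (S k) * ep).
  { replace (norm (vsub z x)) with (INR (S k) * (e * norm (vsub z x))) by (rewrite <- Rmult_assoc, Hke; ring).
    apply Rmult_le_compat_l; [apply pos_INR|lra]. }
  assert (Hkep : INR (S k) * ep < rad * e / 2).
  { apply (Rlt_le_trans _ (INR (S k) * (rad * e * e / 2))).
    - apply Rmult_lt_compat_l; [apply lt_0_INR; lia|exact Hep].
    - right. replace (INR (S k) * (rad * e * e / 2)) with (INR (S k) * e * (rad * e / 2)) by field.
      rewrite Hke. ring. }
  assert (Hzb : norm (vsub z xbar) < rad * e) by (pose proof (norm_sub_triangle n z x xbar); lra).
  assert (Hdist : 0 < setdist C (g p z)).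
  { destruct (Rle_lt_or_eq_dec 0 _ Hdz) as [|H0]; auto. exfalso.
    specialize (Hfar z (setdist_eq0 l C C_nonempty _ C_closed (eq_sym H0))).
    rewrite norm_sub_comm in Hfar. lra. }
  assert (Hrad_e : rad * e <= rad) by nra.
  destruct (HJ z ltac:(lra)) as [Hderz HJz].
  destruct (ekeland_normal n l C (g p) C_closed C_nonempty z (J p z) e (r0 - norm (vsub z xbar))
              Hderz (Rlt_le _ _ He) ltac:(lra) Hdist) as (lam & Hunit & Hnormal & Hgrad).
  { intros y Hy. apply Hek. pose proof (norm_sub_triangle n y z xbar). lra. }
  destruct (HJ xbar ltac:(rewrite norm_sub_self; lra)) as [Hder0 HJ0].
  constructor.
  refine (Witness k p z lam (setdist C (g p z)) rad Hrad ltac:(lra) Hshift Hzb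
            Hder0 HJ0 Hzeta Hlin Hdist eq_refl Hunit Hnormal _ _).
  - pose proof (norm_mtv_perturb l n (J p z) J0 lam) as Hpert. rewrite Hunit in Hpert.
    change (norm (mtv J0 lam) <= 2 * e). lra.
  - intros y Hy. apply Hek. lra.
Qed.

Lemma violation_witnesses : ~ robinson_stable T C g pbar xbar -> forall k, inhabited (witness k).
Proof.
  intros Hns.
  destruct (uniform_linearization 1 Rlt_0_1) as (W1 & d1 & HW1o & HW1p & Hd1 & Hlin1).
  set (r0 := Rmin d1 1 / 2).
  assert (Hr0 : 0 < r0 /\ r0 < d1 /\ r0 <= 1)
    by (unfold r0; pose proof (Rmin_l d1 1); pose proof (Rmin_r d1 1);
        assert (0 < Rmin d1 1) by (apply Rmin_glb_lt; lra); lra).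
  set (L := mnorm J0 + 1). assert (HL : 0 <= L) by (pose proof (mnorm_nonneg _ _ J0); unfold L; lra).
  intros k. pose proof (inv_succ_pos k) as He. pose proof (inv_succ_le1 k) as He1.
  set (e := inv_succ k) in *.
  destruct (jacobian_near e He) as (WJ & dJ & HWJo & HWJp & HdJ & HJ).
  destruct (uniform_linearization e He) as (WL & dL & HWLo & HWLp & HdL & Hlin).
  set (rad := Rmin (Rmin dJ dL) r0).
  assert (Hrad : 0 < rad) by (apply Rmin_glb_lt; [apply Rmin_glb_lt|]; lra).
  assert (HraddJ : rad <= dJ) by (eapply Rle_trans; [apply Rmin_l|apply Rmin_l]).
  assert (HraddL : rad <= dL) by (eapply Rle_trans; [apply Rmin_l|apply Rmin_r]).
  assert (Hradr0 : rad <= r0) by apply Rmin_r.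
  destruct standing as (_ & _ & _ & _ & _ & _ & Hgc & _).
  assert (Heta : 0 < rad * e * e / 2)
    by (apply Rdiv_lt_0_compat; [repeat apply Rmult_lt_0_compat|]; lra).
  destruct (Hgc _ Heta) as (Wg & dg & HWgo & HWgp & Hdg & Hg).
  destruct (zeta_cont e He) as (Wz & HWzo & HWzp & Hz).
  destruct (not_robinson_stable_point Hns (INR (S k)) (Rmin dg (rad * e / 2))
              (fun p => W1 p /\ WJ p /\ WL p /\ Wg p /\ Wz p))
    as (p & x & (HW1 & HWJ & HWL & HWg & HWz) & Hx & eps0 & Heps0 & Hfar).
  { apply pos_INR. }
  { apply Rmin_glb_lt; nra. }
  { repeat (apply open_inter; auto). }
  { tauto. }
  pose proof (Rmin_l dg (rad * e / 2)); pose proof (Rmin_r dg (rad * e / 2)).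
  assert (Hshift : norm (vsub (g p xbar) g0) < rad * e).
  { assert (rad * e * e / 2 <= rad * e) by nra.
    pose proof (Hg p xbar HWg ltac:(rewrite norm_sub_self; lra)). lra. }
  apply (witness_of_violating_point k p x rad r0 L eps0); auto; try lra.
  - intros y z Hy Hz'. apply lipschitz_of_linearization, Hlin1; auto; lra.
  - intros y Hy. apply HJ; auto; lra.
  - intros y z Hy Hz'. apply Hlin; auto; lra.
  - apply Hg; auto; lra.
  - change (norm (vsub x xbar) < rad * e / 2). lra.
Qed.

Lemma image_derivative_of_scaled_limit (q : nat -> P) (s : nat -> R) v :
  (forall k, 0 < s k) ->
  (forall k, norm (vsub (g (q k) xbar) g0) < inv_succ k /\
             has_deriv (g (q k)) xbar (J (q k) xbar) /\
             mnorm (msub (J (q k) xbar) J0) < inv_succ k /\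
             Rabs (zeta (q k) - zeta pbar) < inv_succ k) ->
  vcv (fun k => vscale (/ s k) (vsub (g (q k) xbar) g0)) v ->
  image_derivative g J zeta pbar xbar v.
Proof.
  intros Hs Hq Hv K HK Hcone HK0 Hdir.
  destruct (Req_dec (norm v) 0) as [Hv0|Hv0]; [rewrite (norm_eq0 _ v Hv0); exact HK0|].
  assert (Hvp : 0 < norm v)
    by (destruct (Rle_lt_or_eq_dec _ _ (norm_nonneg _ v)); [auto|congruence]).
  set (a := fun k => vsub (g (q k) xbar) g0).
  set (alpha := fun k => vscale (/ s k) (a k)) in Hv.
  destruct (Hv (norm v / 2)) as [N HN]; [lra|].
  assert (Hshift : subseq (fun k => (k + N)%nat)) by (intros k; lia).
  assert (Halpha : forall k, 0 < norm (alpha (k + N)%nat)).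
  { intros k. specialize (HN (k + N)%nat ltac:(lia)).
    change (norm (vsub (alpha (k + N)%nat) v) < norm v / 2) in HN.
    pose proof (norm_reverse_triangle _ v (alpha (k + N)%nat)).
    rewrite norm_sub_comm in HN. pose proof (Rle_abs (norm v - norm (alpha (k + N)%nat))). lra. }
  assert (Ha : forall k, 0 < norm (a (k + N)%nat)).
  { intros k. specialize (Halpha k). unfold alpha in Halpha.
    rewrite norm_scale, Rabs_right in Halpha by (left; apply Rinv_0_lt_compat, Hs).
    pose proof (Rinv_0_lt_compat _ (Hs (k + N)%nat)). pose proof (norm_nonneg _ (a (k + N)%nat)). nra. }
  assert (Hunit : Defs.image_dir g J zeta pbar xbar (vscale (/ norm v) v)).
  { exists (fun k => q (k + N)%nat). split.
    - intros k. destruct (Hq (k + N)%nat) as (H1 & H2 & H3 & H4).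
      pose proof (inv_succ_le k (k + N) ltac:(lia)). unfold inv_succ in *.
      repeat split; try lra; [apply Ha|exists (J (q (k + N)%nat) xbar); split; auto; lra].
    - apply (vcv_of_le _ _ _ (fun k => norm (vsub (vscale (/ norm (alpha (k + N)%nat)) (alpha (k + N)%nat))
                                                (vscale (/ norm v) v)))).
      + intros k. right. f_equal. f_equal. unfold alpha. rewrite norm_scale, Rabs_right
          by (left; apply Rinv_0_lt_compat, Hs).
        pose proof (Hs (k + N)%nat). pose proof (Ha k).
        change (vsub (g (q (k + N)%nat) xbar) g0) with (a (k + N)%nat). vext. field. lra.
      + apply vcv_iff, vcv_scale; [apply Un_cv_inv; [apply vcv_norm|lra]|];
          apply (vcv_subseq _ alpha); auto. }
  replace v with (vscale (norm v) (vscale (/ norm v) v)) by (vext; field; lra).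
  apply Hcone; [apply Hdir, Hunit|lra].
Qed.

Section Blowup.
Variable W : forall k, witness k.

Local Notation p k := (w_p k (W k)).
Local Notation x k := (w_x k (W k)).
Local Notation lam k := (w_lam k (W k)).
Local Notation dist k := (w_dist k (W k)).
Local Notation rad k := (w_rad k (W k)).

Definition shift k := vsub (g (p k) xbar) g0.
Definition displacement k := vsub (x k) xbar.
Definition scale k := norm (shift k) + norm (displacement k).
Definition scaled_shift k := vscale (/ scale k) (shift k).
Definition scaled_displacement k := vscale (/ scale k) (displacement k).
Definition rate k := dist k / scale k.
Definition linearization_error k := vsub (vsub (g (p k) (x k)) (g (p k) xbar)) (mv J0 (displacement k)).
Definition blowup k := vscale (/ scale k) (vsub (vsub (g (p k) (x k)) (vscale (dist k) (lam k))) g0).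

Lemma scale_pos k : 0 < scale k.
Proof.
  unfold scale. pose proof (norm_nonneg _ (shift k)); pose proof (norm_nonneg _ (displacement k)).
  destruct (Rle_lt_or_eq_dec 0 (norm (shift k) + norm (displacement k))) as [|Hz]; [lra|auto|].
  exfalso. assert (Hx : x k = xbar) by (apply norm_sub_eq0; unfold displacement in *; lra).
  assert (Hg : g (p k) xbar = g0) by (apply norm_sub_eq0; unfold shift in *; lra).
  pose proof (w_dist_pos k (W k)) as Hpos. rewrite <- (w_dist_eq k (W k)) in Hpos.
  rewrite Hx, Hg in Hpos.
  pose proof (setdist_le l C C_nonempty g0 g0 feasible). rewrite norm_sub_self in H1. lra.
Qed.

Lemma scale_lt k : scale k < 2 * rad k * inv_succ k.
Proof.
  pose proof (w_shift_small k (W k)); pose proof (w_x_close k (W k)).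
  unfold scale, shift, displacement. lra.
Qed.

Lemma norm_scaled_sum k : norm (scaled_shift k) + norm (scaled_displacement k) = 1.
Proof.
  pose proof (scale_pos k). unfold scaled_shift, scaled_displacement.
  rewrite !norm_scale, Rabs_right by (left; apply Rinv_0_lt_compat; lra).
  unfold scale in *. field. lra.
Qed.

Lemma linearization_error_le k :
  norm (linearization_error k) <= inv_succ k * norm (displacement k).
Proof.
  pose proof (w_x_close k (W k)). pose proof (inv_succ_pos k). pose proof (inv_succ_le1 k).
  pose proof (w_rad_pos k (W k)). assert (w_rad k (W k) * inv_succ k <= w_rad k (W k)) by nra.
  unfold linearization_error, displacement.
  apply (w_linear k (W k)); [rewrite norm_sub_self|]; lra.
Qed.

Lemma rate_bounds k : 0 < rate k <= mnorm J0 + 1.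
Proof.
  pose proof (scale_pos k). pose proof (w_dist_pos k (W k)). unfold rate. split.
  { apply Rdiv_lt_0_compat; auto. }
  apply (Rmult_le_reg_r (scale k)); auto. unfold Rdiv. rewrite Rmult_assoc, Rinv_l, Rmult_1_r by lra.
  rewrite <- (w_dist_eq k (W k)).
  eapply Rle_trans; [apply (setdist_le l C C_nonempty _ g0 feasible)|].
  replace (vsub (g (p k) (x k)) g0)
    with (vadd (shift k) (vadd (mv J0 (displacement k)) (linearization_error k)))
    by (unfold shift, linearization_error; vext).
  pose proof (norm_triangle l (mv J0 (displacement k)) (linearization_error k)).
  pose proof (norm_mv_le l n J0 (displacement k)). pose proof (linearization_error_le k).
  pose proof (inv_succ_le1 k). pose proof (inv_succ_pos k).
  pose proof (norm_nonneg _ (displacement k)). pose proof (norm_nonneg _ (shift k)).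
  pose proof (mnorm_nonneg _ _ J0).
  eapply Rle_trans; [apply norm_triangle|]. unfold scale. nra.
Qed.

Lemma blowup_decomposition k : blowup k =
  vadd (vadd (scaled_shift k) (mv J0 (scaled_displacement k)))
       (vsub (vscale (/ scale k) (linearization_error k)) (vscale (rate k) (lam k))).
Proof.
  pose proof (scale_pos k). unfold blowup, scaled_shift, scaled_displacement, rate.
  rewrite mv_scale. unfold shift, linearization_error. vext. field. lra.
Qed.

Lemma blowup_base k : vadd g0 (vscale (scale k) (blowup k)) = vsub (g (p k) (x k)) (vscale (dist k) (lam k)).
Proof. pose proof (scale_pos k). unfold blowup. vext. field. lra. Qed.

Lemma blowup_normal k :
  regular_normal C (vadd g0 (vscale (scale k) (blowup k))) (lam k).
Proof. rewrite blowup_base. apply w_lam_normal. Qed.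

Lemma blowup_subsequence : exists Phi v u lb th, subseq Phi /\
  vcv (fun j => scaled_shift (Phi j)) v /\ vcv (fun j => scaled_displacement (Phi j)) u /\
  vcv (fun j => lam (Phi j)) lb /\ Un_cv (fun j => rate (Phi j)) th.
Proof.
  assert (Hsum := norm_scaled_sum).
  destruct (bolzano_weierstrass l (fun k => lam k) 1) as (phi1 & lb & H1 & Hlb).
  { intros k. rewrite w_lam_unit. lra. }
  destruct (bolzano_weierstrass l (fun k => scaled_shift (phi1 k)) 1) as (phi2 & v & H2 & Hv).
  { intros k. pose proof (Hsum (phi1 k)). pose proof (norm_nonneg _ (scaled_displacement (phi1 k))). lra. }
  destruct (bolzano_weierstrass n (fun k => scaled_displacement (phi1 (phi2 k))) 1)
    as (phi3 & u & H3 & Hu).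
  { intros k. pose proof (Hsum (phi1 (phi2 k))).
    pose proof (norm_nonneg _ (scaled_shift (phi1 (phi2 k)))). lra. }
  destruct (bolzano_weierstrass_R (fun k => rate (phi1 (phi2 (phi3 k)))) (mnorm J0 + 1))
    as (phi4 & th & H4 & Hth).
  { intros k. destruct (rate_bounds (phi1 (phi2 (phi3 k)))). rewrite Rabs_right; lra. }
  exists (fun k => phi1 (phi2 (phi3 (phi4 k)))), v, u, lb, th.
  assert (H34 : subseq (fun k => phi3 (phi4 k))) by (apply subseq_comp; auto).
  assert (H234 : subseq (fun k => phi2 (phi3 (phi4 k)))) by (apply (subseq_comp phi2); auto).
  repeat split.
  - apply (subseq_comp phi1); auto.
  - apply (vcv_subseq _ (fun k => scaled_shift (phi1 (phi2 k))) v); auto.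
  - apply (vcv_subseq _ (fun k => scaled_displacement (phi1 (phi2 (phi3 k)))) u); auto.
  - apply (vcv_subseq _ (fun k => lam (phi1 k)) lb); auto.
  - exact Hth.
Qed.

(** Testing the Ekeland inequality at [xbar + scale k * u'] bounds the rate by the
    residual of the linearised constraint in direction [v + J0 u']. *)
Lemma rate_le k v u' : scale k * norm u' < rad k ->
  rate k <= setdist C (vadd g0 (vscale (scale k) (vadd v (mv J0 u')))) / scale k
            + norm (vsub (scaled_shift k) v) + inv_succ k * (2 * norm u' + 1).
Proof.
  intros Hsmall. pose proof (scale_pos k) as Htau. set (tau := scale k) in *.
  set (e := inv_succ k). pose proof (inv_succ_pos k) as He. fold e in He.
  set (y := vadd xbar (vscale tau u')).
  assert (Hyx : vsub y xbar = vscale tau u') by (unfold y; vext).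
  assert (Hny : norm (vsub y xbar) = tau * norm u') by (rewrite Hyx, norm_scale, Rabs_right; lra).
  set (Z := vadd g0 (vscale tau (vadd v (mv J0 u')))).
  pose proof (w_ekeland k (W k) y ltac:(lra)) as Hek. fold e in Hek.
  pose proof (setdist_lipschitz l C C_nonempty (g (p k) y) Z) as HZ.
  assert (Hsplit : vsub (g (p k) y) Z = vadd (vscale tau (vsub (scaled_shift k) v))
            (vsub (vsub (g (p k) y) (g (p k) xbar)) (mv J0 (vsub y xbar)))).
  { rewrite Hyx, mv_scale. unfold Z, scaled_shift, shift. fold tau. vext. field. lra. }
  assert (Hlin : norm (vsub (vsub (g (p k) y) (g (p k) xbar)) (mv J0 (vsub y xbar)))
                 <= e * (tau * norm u')).
  { rewrite <- Hny. pose proof (w_rad_pos k (W k)).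
    apply (w_linear k (W k)); [rewrite norm_sub_self|]; lra. }
  assert (Hyxk : norm (vsub y (x k)) <= tau * norm u' + tau).
  { pose proof (norm_sub_triangle n y xbar (x k)). rewrite (norm_sub_comm n xbar) in H.
    assert (norm (displacement k) <= tau) by (unfold tau, scale; pose proof (norm_nonneg _ (shift k)); lra).
    unfold displacement in H0. lra. }
  rewrite Hsplit in HZ.
  pose proof (norm_triangle l (vscale tau (vsub (scaled_shift k) v))
                (vsub (vsub (g (p k) y) (g (p k) xbar)) (mv J0 (vsub y xbar)))).
  rewrite norm_scale, Rabs_right in H by lra.
  assert (Hrate : dist k <= setdist C Z + tau * norm (vsub (scaled_shift k) v)
                            + tau * (e * (2 * norm u' + 1))).
  { assert (e * norm (vsub y (x k)) <= e * (tau * norm u' + tau)) by (apply Rmult_le_compat_l; lra).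
    lra. }
  unfold rate. fold tau. apply (Rmult_le_reg_r tau); [lra|].
  unfold Rdiv. rewrite Rmult_assoc, Rinv_l, Rmult_1_r by lra.
  replace ((setdist C Z * / tau + norm (vsub (scaled_shift k) v) + e * (2 * norm u' + 1)) * tau)
    with (setdist C Z + tau * norm (vsub (scaled_shift k) v) + tau * (e * (2 * norm u' + 1)))
    by (field; lra).
  exact Hrate.
Qed.

Section Limit.
Variables (Phi : nat -> nat) (v : Vec l) (u : Vec n) (lb : Vec l) (th : R).
Hypothesis Phi_subseq : subseq Phi.
Hypothesis shift_cv : vcv (fun j => scaled_shift (Phi j)) v.
Hypothesis displacement_cv : vcv (fun j => scaled_displacement (Phi j)) u.
Hypothesis lam_cv : vcv (fun j => lam (Phi j)) lb.
Hypothesis rate_cv : Un_cv (fun j => rate (Phi j)) th.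

Let inv_succ_Phi j : inv_succ (Phi j) <= inv_succ j.
Proof. apply inv_succ_le, subseq_ge, Phi_subseq. Qed.

Lemma scale_tends_down_0 : tends_down_0 (fun j => scale (Phi j)).
Proof.
  split; [intros; apply scale_pos|].
  apply (Un_cv_of_le _ (fun j => 2 * inv_succ j)).
  - intros j. pose proof (scale_pos (Phi j)). pose proof (scale_lt (Phi j)).
    pose proof (inv_succ_Phi j). pose proof (inv_succ_pos (Phi j)).
    pose proof (w_rad_le1 _ (W (Phi j))).
    rewrite Rminus_0_r, Rabs_right by lra. nra.
  - replace 0 with (2 * 0) by ring. apply CV_mult; [apply Un_cv_const|apply inv_succ_cv].
Qed.

Lemma limit_in_image_derivative : image_derivative g J zeta pbar xbar v.
Proof.
  apply (image_derivative_of_scaled_limit (fun j => p (Phi j)) (fun j => scale (Phi j)));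
    [intros; apply scale_pos| |exact shift_cv].
  intros j. pose proof (inv_succ_Phi j). pose proof (inv_succ_pos (Phi j)).
  pose proof (w_shift_small _ (W (Phi j))). pose proof (w_rad_le1 _ (W (Phi j))).
  pose proof (w_rad_pos _ (W (Phi j))).
  assert (w_rad _ (W (Phi j)) * inv_succ (Phi j) <= inv_succ (Phi j)) by nra.
  repeat split; [lra|apply w_deriv| |]; eapply Rlt_le_trans; eauto;
    [apply w_deriv_close|apply w_zeta_close].
Qed.

Lemma limit_nonzero : ~ (v = vzero /\ u = vzero).
Proof.
  intros [Hv Hu].
  assert (Hsum : Un_cv (fun j => norm (scaled_shift (Phi j)) + norm (scaled_displacement (Phi j)))
                       (norm v + norm u)) by (apply CV_plus; apply vcv_norm; auto).
  apply (Un_cv_ext _ (fun _ => 1)) in Hsum; [|intros; apply norm_scaled_sum].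
  pose proof (UL_sequence _ _ _ Hsum (Un_cv_const 1)).
  rewrite Hv, Hu, !norm_vzero in H. lra.
Qed.

Lemma limit_rate_zero :
  (forall t, tends_down_0 t -> exists u', liminf_eq (fun k =>
     setdist C (vadd g0 (vscale (t k) (vadd v (mv J0 u')))) / t k) 0) ->
  th = 0.
Proof.
  intros Hres. destruct (Hres _ scale_tends_down_0) as [u' Hli]. set (U := norm u').
  pose proof (norm_nonneg _ u') as HU. fold U in HU.
  apply Rle_antisym.
  2:{ apply (@Rle_cv_lim (fun _ => 0) (fun j => rate (Phi j))); auto using Un_cv_const.
      intros j. left; apply rate_bounds. }
  apply Rle_plus_epsilon. intros eps Heps.
  set (ep := Rmin (eps / 4) 1). assert (Hep : 0 < ep) by (apply Rmin_glb_lt; lra).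
  assert (Hep1 : ep <= eps / 4) by apply Rmin_l. assert (Hep2 : ep <= 1) by apply Rmin_r.
  destruct (rate_cv ep Hep) as [N1 HN1]. destruct (shift_cv ep Hep) as [N2 HN2].
  destruct (inv_succ_small (ep / (2 * U + 1))) as [N3 HN3]; [apply Rdiv_lt_0_compat; lra|].
  destruct (proj2 (Hli ep Hep) (max N1 (max N2 N3))) as (j & Hj & Hf).
  specialize (HN1 j ltac:(lia)). specialize (HN2 j ltac:(lia)). specialize (HN3 j ltac:(lia)).
  unfold R_dist in HN1. apply Rabs_def2 in HN1.
  set (m := Phi j) in *. pose proof (inv_succ_Phi j) as Hm. fold m in Hm.
  assert (Hem : inv_succ m * (2 * U + 1) < ep).
  { apply (Rmult_lt_reg_r (/ (2 * U + 1))); [apply Rinv_0_lt_compat; lra|].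
    rewrite Rmult_assoc, Rinv_r by lra. unfold Rdiv in HN3. lra. }
  assert (Hradius : scale m * U < rad m).
  { pose proof (scale_lt m). pose proof (scale_pos m). pose proof (inv_succ_pos m).
    pose proof (w_rad_pos _ (W m)).
    assert (scale m * U <= 2 * rad m * inv_succ m * U) by (apply Rmult_le_compat_r; lra).
    assert (2 * inv_succ m * U < 1) by nra. nra. }
  pose proof (rate_le m v u' Hradius). fold U in H. rewrite Rplus_0_l in Hf. lra.
Qed.

Section ZeroRate.
Hypothesis rate_zero : th = 0.

Lemma limit_blowup : vcv (fun j => blowup (Phi j)) (vadd v (mv J0 u)).
Proof.
  apply (vcv_ext _ (fun j => vadd (vadd (scaled_shift (Phi j)) (mv J0 (scaled_displacement (Phi j))))
            (vsub (vscale (/ scale (Phi j)) (linearization_error (Phi j)))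
                  (vscale (rate (Phi j)) (lam (Phi j))))));
    [intros; symmetry; apply blowup_decomposition|].
  replace (vadd v (mv J0 u)) with (vadd (vadd v (mv J0 u)) (vsub vzero (vscale th lb)))
    by (rewrite rate_zero; vext).
  apply vcv_add; [apply vcv_add; [exact shift_cv|apply vcv_mv, displacement_cv]|].
  apply vcv_sub; [|apply vcv_scale; auto].
  apply (vcv_of_le _ _ _ inv_succ); [|exact inv_succ_cv]. intros j.
  replace (vsub (vscale (/ scale (Phi j)) (linearization_error (Phi j))) vzero)
    with (vscale (/ scale (Phi j)) (linearization_error (Phi j))) by vext.
  pose proof (scale_pos (Phi j)). pose proof (inv_succ_Phi j). pose proof (inv_succ_pos (Phi j)).
  pose proof (linearization_error_le (Phi j)).
  assert (norm (displacement (Phi j)) <= scale (Phi j))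
    by (unfold scale; pose proof (norm_nonneg _ (shift (Phi j))); lra).
  rewrite norm_scale, Rabs_right by (left; apply Rinv_0_lt_compat; lra).
  apply (Rmult_le_reg_l (scale (Phi j))); [lra|].
  rewrite <- Rmult_assoc, Rinv_r, Rmult_1_l by lra. nra.
Qed.

Lemma limit_tangent : tangent_cone C g0 (vadd v (mv J0 u)).
Proof.
  exists (fun j => scale (Phi j)), (fun j => blowup (Phi j)).
  split; [apply scale_tends_down_0|split; [apply limit_blowup|]].
  intros j. apply (blowup_normal (Phi j)).
Qed.

Lemma limit_dir_normal : dir_normal C g0 (vadd v (mv J0 u)) lb.
Proof.
  exists (fun j => scale (Phi j)), (fun j => blowup (Phi j)), (fun j => lam (Phi j)).
  split; [apply scale_tends_down_0|split; [apply limit_blowup|split; [exact lam_cv|]]].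
  intros j. split; [apply (blowup_normal (Phi j))|apply blowup_normal].
Qed.

End ZeroRate.

Lemma limit_unit : norm lb = 1.
Proof.
  apply (UL_sequence (fun j => norm (lam (Phi j)))); [apply vcv_norm, lam_cv|].
  apply (Un_cv_ext (fun _ => 1)); [intros; symmetry; apply w_lam_unit|apply Un_cv_const].
Qed.

Lemma limit_kernel : mtv J0 lb = vzero.
Proof.
  apply norm_eq0, Rle_antisym; [|apply norm_nonneg].
  apply (@Rle_cv_lim (fun j => norm (mtv J0 (lam (Phi j)))) (fun j => 2 * inv_succ j)).
  - intros j. eapply Rle_trans; [apply w_lam_kernel|].
    pose proof (inv_succ_Phi j). lra.
  - apply vcv_norm. rewrite !mtv_mv. apply (vcv_mv _ _ _ (fun j => lam (Phi j))), lam_cv.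
  - replace 0 with (2 * 0) by ring. apply CV_mult; [apply Un_cv_const|apply inv_succ_cv].
Qed.

End Limit.
End Blowup.
End ParametricSystem.

Theorem corollary3p6 (P : Type) (T : Topology P) (n l : nat)
  (C : Vec l -> Prop) (g : P -> Vec n -> Vec l) (J : P -> Vec n -> Mat l n)
  (pbar : P) (xbar : Vec n) (zeta : P -> R)
  (HC : is_closed C)
  (Hstand : standing_assumptions T g J pbar xbar)
  (Hgph : C (g pbar xbar))
  (Hzeta : cont_at T zeta pbar)
  (H1 : forall v, image_derivative g J zeta pbar xbar v ->
        forall t : nat -> R, tends_down_0 t ->
        exists u : Vec n,
          liminf_eq (fun k => setdist C (vadd (g pbar xbar)
                        (vscale (t k) (vadd v (mv (J pbar xbar) u)))) / t k) 0)
  (H2 : forall (v : Vec l) (u : Vec n),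
        image_derivative g J zeta pbar xbar v ->
        ~ (v = vzero /\ u = vzero) ->
        tangent_cone C (g pbar xbar) (vadd v (mv (J pbar xbar) u)) ->
        forall lam : Vec l,
          dir_normal C (g pbar xbar) (vadd v (mv (J pbar xbar) u)) lam ->
          mtv (J pbar xbar) lam = vzero ->
          lam = vzero) :
  robinson_stable T C g pbar xbar.
Proof.
  apply NNPP. intros Hunstable.
  pose proof (violation_witnesses P T n l C g J pbar xbar zeta HC Hstand Hgph Hzeta Hunstable) as Hw.
  pose (W := fun k => epsilon (Hw k) (fun _ => True)).
  destruct (blowup_subsequence P n l C g J pbar xbar zeta Hgph W)
    as (Phi & v & u & lb & th & HPhi & Hv & Hu & Hlb & Hth).
  assert (HD : image_derivative g J zeta pbar xbar v) by (eapply limit_in_image_derivative; eauto).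
  assert (Hth0 : th = 0) by (eapply limit_rate_zero; eauto).
  assert (Hlb0 : lb = vzero).
  { eapply H2; eauto.
    - eapply limit_nonzero; eauto.
    - eapply limit_tangent; eauto.
    - eapply limit_dir_normal; eauto.
    - eapply limit_kernel; eauto. }
  pose proof (limit_unit P n l C g J pbar xbar zeta W Phi lb Hlb) as Hunit.
  rewrite Hlb0, norm_vzero in Hunit. lra.
Qed.
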